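(* Let $\delta:\,]0,+\infty[\to\mathbb R$ be nonnegative, bounded and continuously differentiable, and consider $\ddot r+\delta(r)\dot r=-1/r^2$, $r>0$. Fix $T,r_B>0$. Let $\mathcal I$ be the set of $v\in\mathbb R$ such that the solution $r$ with $r(0)=r_B$, $\dot r(0)=v$ is defined (with $r>0$) in the past up to time $t=-T$, and define $\mathfrak R:\mathcal I\to\mathbb R$ by $\mathfrak R(v)=r(-T)$. Then: (i) there exists $\beta\in\mathbb R$ such that $\mathcal I=\,]-\infty,\beta[$; (ii) $\mathfrak R$ is a decreasing diffeomorphism from $]-\infty,\beta[$ onto $]0,+\infty[$; precisely, $\mathfrak R'(v)<0$ for every $v<\beta$, $\lim_{v\to-\infty}\mathfrak R(v)=+\infty$ and $\lim_{v\to\beta^-}\mathfrak R(v)=0$. *)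

From Stdlib Require Import Reals.
From Coquelicot Require Import Coquelicot.
Open Scope R_scope.

Definition admissible_delta (delta : R -> R) : Prop :=
  (forall x, 0 < x -> 0 <= delta x) /\
  (exists M, forall x, 0 < x -> delta x <= M) /\
  (forall x, 0 < x -> ex_derive delta x) /\
  (forall x, 0 < x -> continuous (Derive delta) x).

Definition past_solution (delta : R -> R) (T rB v : R) (r : R -> R) : Prop :=
  r 0 = rB /\ Derive r 0 = v /\
  forall t, -T <= t <= 0 ->
    0 < r t /\
    ex_derive r t /\
    is_derive (Derive r) t (- delta (r t) * Derive r t - 1 / (r t) ^ 2).

Definition in_I (delta : R -> R) (T rB v : R) : Prop :=
  exists r, past_solution delta T rB v r.

(* Reversing time, [u s = r (- s)] solves [u'' = delta u * u' - 1 / u ^ 2], which the Lienard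
   substitution [w = u' - D u], with [D] a primitive of [delta], turns into the first-order system
   [u' = w + D u], [w' = - 1 / u ^ 2].  Replacing [u] by a C^1 cutoff at height [eta] inside [D] and
   [1 / u ^ 2] makes the system globally Lipschitz, so Picard iteration solves it on the whole line,
   and the solutions of the original problem on [[-T, 0]] are exactly the truncated solutions staying
   above [2 eta] for some [eta].  The derivative of the flow with respect to [v = - u'(0)] solves the
   linearized system and is negative, so the endpoint map [v |-> u T] has negative derivative, and the
   admissible velocities form an open, downward closed set, bounded above because a large [v] drives
   [u] to [0] before time [T].  A very negative [v] sends [u T] to [+oo]; and if [u T] stayed away from
   [0] below the supremum [beta], Lipschitz dependence on [v] would make [beta] itself admissible. *)

From Stdlib Require Import Reals Lra Lia Psatz Classical ClassicalEpsilon.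
From Coquelicot Require Import Coquelicot.
Open Scope R_scope.

Lemma continuous_epsilon_delta (f : R -> R) x :
  continuous f x <->
  forall eps, 0 < eps -> exists d, 0 < d /\
    forall y, Rabs (y - x) < d -> Rabs (f y - f x) < eps.
Proof.
  split; intros H; [apply continuity_pt_filterlim in H | apply continuity_pt_filterlim];
    unfold continuity_pt, continue_in, limit1_in, limit_in in *; simpl in *; unfold R_dist in *;
    intros eps Heps; destruct (H eps Heps) as [d [Hd Hy]]; exists d; split; auto.
  - intros y Hyx. destruct (Req_dec y x) as [->|Hne].
    + rewrite Rminus_diag, Rabs_R0; auto.
    + apply Hy. repeat split; auto.
  - intros y [_ Hy']. auto.
Qed.

Lemma lipschitz_continuous (f : R -> R) K x : 0 <= K ->
  (forall y, Rabs (f y - f x) <= K * Rabs (y - x)) -> continuous f x.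
Proof.
  intros HK H. apply continuous_epsilon_delta. intros eps He.
  exists (eps / (K + 1)). split; [apply Rdiv_lt_0_compat; lra|].
  intros y Hy. eapply Rle_lt_trans; [apply H|].
  apply Rle_lt_trans with ((K + 1) * Rabs (y - x)); [pose proof (Rabs_pos (y - x)); nra|].
  apply Rmult_lt_reg_r with (/ (K + 1)); [apply Rinv_0_lt_compat; lra|].
  replace ((K + 1) * Rabs (y - x) * / (K + 1)) with (Rabs (y - x)) by (field; lra).
  exact Hy.
Qed.

Lemma is_derive_continuous (f : R -> R) x l : is_derive f x l -> continuous f x.
Proof. intros H. apply (@ex_derive_continuous R_AbsRing R_NormedModule). exists l; exact H. Qed.

Lemma is_derive_val (f : R -> R) (x l l' : R) : l = l' -> is_derive f x l -> is_derive f x l'.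
Proof. intros ->; auto. Qed.

Lemma is_derive_Rplus (f g : R -> R) x df dg : is_derive f x df -> is_derive g x dg ->
  is_derive (fun x => f x + g x) x (df + dg).
Proof. exact (is_derive_plus f g x df dg). Qed.

Lemma is_derive_Rminus (f g : R -> R) x df dg : is_derive f x df -> is_derive g x dg ->
  is_derive (fun x => f x - g x) x (df - dg).
Proof. exact (is_derive_minus f g x df dg). Qed.

Lemma is_derive_Ropp (f : R -> R) x df : is_derive f x df -> is_derive (fun x => - f x) x (- df).
Proof. exact (is_derive_opp f x df). Qed.

Lemma is_derive_Rmult (f g : R -> R) x df dg : is_derive f x df -> is_derive g x dg ->
  is_derive (fun x => f x * g x) x (df * g x + f x * dg).
Proof. intros Hf Hg. exact (is_derive_mult f g x df dg Hf Hg Rmult_comm). Qed.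

Lemma is_derive_Rcomp (f g : R -> R) x df dg : is_derive f (g x) df -> is_derive g x dg ->
  is_derive (fun x => f (g x)) x (dg * df).
Proof. exact (is_derive_comp f g x df dg). Qed.

Lemma is_derive_Rid x : is_derive (fun x : R => x) x 1.
Proof. exact (is_derive_id x). Qed.

Lemma is_derive_Ropp_id x : is_derive (fun x : R => - x) x (-1).
Proof. apply is_derive_Ropp, is_derive_Rid. Qed.

Lemma is_derive_exp_scal c x : is_derive (fun x => exp (c * x)) x (c * exp (c * x)).
Proof.
  apply (is_derive_Rcomp exp (fun x => c * x)); [apply is_derive_exp|].
  apply (is_derive_val _ _ (c * 1)); [ring|]. apply is_derive_scal, is_derive_Rid.
Qed.

Lemma is_derive_primitive (f : R -> R) c a : (forall t, continuous f t) ->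
  forall t, is_derive (fun t => c + RInt f a t) t (f t).
Proof.
  intros Hf t. apply (is_derive_val _ _ (0 + f t)); [ring|].
  apply is_derive_Rplus; [exact (is_derive_const c t)|].
  apply (is_derive_RInt f (RInt f a) a t); [|apply Hf].
  apply filter_forall. intros b.
  apply (@RInt_correct R_CompleteNormedModule), (@ex_RInt_continuous R_CompleteNormedModule).
  intros; apply Hf.
Qed.

Lemma primitive_base (f : R -> R) c a : c + RInt f a a = c.
Proof. rewrite RInt_point. unfold zero; simpl. ring. Qed.

Lemma exp_le_compat a b : a <= b -> exp a <= exp b.
Proof. intros [H | ->]; [left; apply exp_increasing; lra | lra]. Qed.

Lemma abs_le_of_sqr_le a b : 0 <= b -> a ^ 2 <= b ^ 2 -> Rabs a <= b.
Proof.
  intros Hb H. destruct (Rle_dec (Rabs a) b) as [|Hn]; auto.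
  rewrite <- pow2_abs in H. nra.
Qed.

Lemma le_geometric_eq0 x K : (forall n, Rabs x <= K * (1/2) ^ n) -> x = 0.
Proof.
  intros H. destruct (Req_dec x 0) as [|Hx]; auto. exfalso.
  assert (Hp : 0 < Rabs x) by (apply Rabs_pos_lt; auto).
  assert (HK : 0 <= K) by (specialize (H 0%nat); simpl in H; lra).
  destruct (pow_lt_1_zero (1/2)) with (y := Rabs x / (K + 1)) as [N HN].
  - rewrite Rabs_right; lra.
  - apply Rdiv_lt_0_compat; lra.
  - specialize (HN N (le_n N)). specialize (H N).
    rewrite Rabs_right in HN by (left; apply pow_lt; lra).
    apply Rmult_lt_compat_r with (r := K + 1) in HN; [|lra].
    replace (Rabs x / (K + 1) * (K + 1)) with (Rabs x) in HN by (field; lra).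
    pose proof (pow_lt (1/2) N). nra.
Qed.

Lemma mean_value (f df : R -> R) a b : a < b ->
  (forall x, a <= x <= b -> is_derive f x (df x)) ->
  exists c, a < c < b /\ f b - f a = df c * (b - a).
Proof.
  intros Hab H. destruct (MVT_cor2 f df a b Hab) as [c [Hc1 Hc2]].
  - intros c Hc; apply is_derive_Reals, H; lra.
  - exists c; split; [lra|auto].
Qed.

Lemma derive_nonneg_le (f df : R -> R) a b : a <= b ->
  (forall x, a <= x <= b -> is_derive f x (df x)) ->
  (forall x, a < x < b -> 0 <= df x) -> f a <= f b.
Proof.
  intros [Hab | <-] H Hd; [|lra].
  destruct (mean_value f df a b) as [c [Hc E]]; auto.
  specialize (Hd c Hc). nra.
Qed.

Lemma derive_pos_lt (f df : R -> R) a b : a < b ->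
  (forall x, a <= x <= b -> is_derive f x (df x)) ->
  (forall x, a < x < b -> 0 < df x) -> f a < f b.
Proof.
  intros Hab H Hd. destruct (mean_value f df a b) as [c [Hc E]]; auto.
  specialize (Hd c Hc). nra.
Qed.

Lemma derive_zero_eq (f df : R -> R) a b : a <= b ->
  (forall x, a <= x <= b -> is_derive f x (df x)) ->
  (forall x, a < x < b -> df x = 0) -> f a = f b.
Proof.
  intros Hab H Hd. apply Rle_antisym.
  - apply (derive_nonneg_le f df a b); auto. intros x Hx; rewrite Hd; auto; lra.
  - enough (- f a <= - f b) by lra.
    apply (derive_nonneg_le (fun x => - f x) (fun x => - df x) a b); auto.
    + intros x Hx. apply is_derive_Ropp; auto.
    + intros x Hx; rewrite Hd; auto; lra.
Qed.

Lemma lipschitz_of_derive_bound (g dg : R -> R) K a b x y : a <= x <= b -> a <= y <= b ->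
  (forall s, a <= s <= b -> is_derive g s (dg s)) -> (forall s, a <= s <= b -> Rabs (dg s) <= K) ->
  Rabs (g x - g y) <= K * Rabs (x - y).
Proof.
  intros Hx Hy Hd Hk.
  destruct (Rtotal_order x y) as [Hxy|[<-|Hxy]].
  - destruct (mean_value g dg x y Hxy) as [c [Hc E]]; [intros; apply Hd; lra|].
    rewrite Rabs_minus_sym, (Rabs_minus_sym x), E, Rabs_mult.
    apply Rmult_le_compat_r; [apply Rabs_pos | apply Hk; lra].
  - rewrite !Rminus_diag, Rabs_R0. pose proof (Hk x Hx). pose proof (Rabs_pos (dg x)). lra.
  - destruct (mean_value g dg y x Hxy) as [c [Hc E]]; [intros; apply Hd; lra|].
    rewrite E, Rabs_mult.
    apply Rmult_le_compat_r; [apply Rabs_pos | apply Hk; lra].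
Qed.

Lemma lipschitz_of_derive_bound_R (g dg : R -> R) K x y :
  (forall s, is_derive g s (dg s)) -> (forall s, Rabs (dg s) <= K) ->
  Rabs (g x - g y) <= K * Rabs (x - y).
Proof.
  intros Hd Hk. apply (lipschitz_of_derive_bound g dg K (Rmin x y) (Rmax x y)); auto.
  - split; [apply Rmin_l | apply Rmax_l].
  - split; [apply Rmin_r | apply Rmax_r].
Qed.

Lemma taylor1_remainder (g dg : R -> R) K x y :
  (forall s, Rmin x y <= s <= Rmax x y -> is_derive g s (dg s)) ->
  (forall s, Rmin x y <= s <= Rmax x y -> Rabs (dg s - dg x) <= K * Rabs (s - x)) ->
  Rabs (g y - g x - dg x * (y - x)) <= K * (y - x) ^ 2.
Proof.
  intros Hd Hk.
  destruct (Req_dec x y) as [<-|Hxy].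
  { replace (g x - g x - dg x * (x - x)) with 0 by ring. rewrite Rabs_R0. nra. }
  set (a := Rmin x y). set (b := Rmax x y).
  assert (Hab : a < b) by (unfold a, b, Rmin, Rmax; destruct Rle_dec; lra).
  destruct (mean_value g dg a b Hab Hd) as [c [Hc E]].
  assert (Hc' : a <= c <= b) by lra.
  assert (Hrem : g y - g x - dg x * (y - x) = (dg c - dg x) * (y - x)).
  { unfold a, b, Rmin, Rmax in *; destruct Rle_dec; lra. }
  assert (Hcx : Rabs (c - x) <= Rabs (y - x)).
  { unfold a, b, Rmin, Rmax, Rabs in *; destruct Rle_dec; repeat destruct Rcase_abs; lra. }
  rewrite Hrem, Rabs_mult. specialize (Hk c Hc').
  assert (HK : 0 <= K * Rabs (c - x)) by (eapply Rle_trans; [apply Rabs_pos | exact Hk]).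
  rewrite <- pow2_abs. simpl. rewrite Rmult_1_r.
  pose proof (Rabs_pos (y - x)). pose proof (Rabs_pos (dg c - dg x)).
  assert (Hcx0 : 0 < Rabs (c - x))
    by (apply Rabs_pos_lt; unfold a, b, Rmin, Rmax in Hc; destruct Rle_dec; lra).
  assert (0 <= K) by nra.
  apply Rle_trans with (K * Rabs (c - x) * Rabs (y - x)); [apply Rmult_le_compat_r; lra|].
  rewrite Rmult_assoc. apply Rmult_le_compat_l; [lra|]. apply Rmult_le_compat_r; lra.
Qed.

Lemma derive_neg_right (f : R -> R) x l : is_derive f x l -> l < 0 ->
  exists d, 0 < d /\ forall y, x < y < x + d -> f y < f x.
Proof.
  intros H Hl. apply is_derive_Reals in H.
  destruct (H (- l / 2)) as [d Hd]; [lra|].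
  exists d. split; [apply cond_pos|].
  intros y Hy. specialize (Hd (y - x)).
  replace (x + (y - x)) with y in Hd by ring.
  assert (Habs : Rabs ((f y - f x) / (y - x) - l) < - l / 2)
    by (apply Hd; [lra | rewrite Rabs_right; lra]).
  apply Rabs_def2 in Habs.
  enough (f y - f x < 0) by lra.
  replace (f y - f x) with ((f y - f x) / (y - x) * (y - x)) by (field; lra).
  nra.
Qed.

Lemma derive_pos_left (f : R -> R) x l : is_derive f x l -> 0 < l ->
  exists d, 0 < d /\ forall y, x - d < y < x -> f y < f x.
Proof.
  intros H Hl.
  destruct (derive_neg_right (fun y => f (- y)) (- x) (- l)) as [d [Hd Hy]].
  - apply (is_derive_val _ _ (-1 * l)); [ring|].
    apply (is_derive_Rcomp f (fun y => - y)); [rewrite Ropp_involutive; exact H | apply is_derive_Ropp_id].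
  - lra.
  - exists d. split; auto. intros y Hy'. specialize (Hy (- y) ltac:(lra)).
    rewrite !Ropp_involutive in Hy. exact Hy.
Qed.

Lemma continuous_induction (f : R -> R) a b : a <= b ->
  (forall x, a <= x <= b -> continuous f x) -> f a < 0 ->
  (forall s, a < s <= b -> (forall x, a <= x < s -> f x < 0) -> f s < 0) ->
  forall x, a <= x <= b -> f x < 0.
Proof.
  intros Hab Hc Ha Hstep.
  set (E := fun s => a <= s <= b /\ forall x, a <= x <= s -> f x < 0).
  assert (HEa : E a) by (split; [lra | intros x Hx; replace x with a by lra; auto]).
  assert (HE : bound E) by (exists b; intros s [Hs _]; lra).
  destruct (completeness E HE (ex_intro _ a HEa)) as [S [HS1 HS2]].
  assert (HaS : a <= S) by (apply HS1, HEa).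
  assert (HSb : S <= b) by (apply HS2; intros s [Hs _]; lra).
  assert (Hbelow : forall x, a <= x < S -> f x < 0).
  { intros x Hx. destruct (classic (exists s, E s /\ x <= s)) as [[s [[_ Hs] Hxs]]|Hno].
    - apply Hs. lra.
    - exfalso. enough (S <= x) by lra. apply HS2. intros s Es.
      destruct (Rle_dec s x); auto. exfalso. apply Hno. exists s. split; auto. lra. }
  assert (HfS : f S < 0) by (destruct (Req_dec a S) as [<-|Hne]; auto; apply Hstep; auto; lra).
  assert (HSeqb : S = b).
  { destruct (Req_dec S b) as [|Hne]; auto. exfalso.
    destruct (proj1 (continuous_epsilon_delta f S) (Hc S ltac:(lra)) (- f S)) as [d [Hd Hy]]; [lra|].
    set (s' := Rmin b (S + d / 2)).
    assert (S < s') by (unfold s'; apply Rmin_case; lra).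
    enough (s' <= S) by lra.
    assert (s' <= b) by (unfold s'; apply Rmin_l).
    assert (s' <= S + d / 2) by (unfold s'; apply Rmin_r).
    apply HS1. split; [lra|].
    intros x Hx. destruct (Rlt_dec x S); [apply Hbelow; lra|].
    assert (Rabs (x - S) < d) by (rewrite Rabs_right; lra).
    specialize (Hy x ltac:(assumption)). apply Rabs_def2 in Hy. lra. }
  intros x Hx. destruct (Req_dec x b) as [->|Hne]; [rewrite <- HSeqb; auto | apply Hbelow; lra].
Qed.

Lemma gronwall (E dE : R -> R) lam beta S : 0 <= lam -> 0 <= beta ->
  (forall s, 0 <= s <= S -> is_derive E s (dE s)) ->
  (forall s, 0 <= s <= S -> dE s <= lam * E s + beta) ->
  forall s, 0 <= s <= S -> E s <= (E 0 + beta * s) * exp (lam * s).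
Proof.
  intros Hl Hb Hd Hle s Hs.
  assert (H : E s * exp (- lam * s) - beta * s <= E 0 * exp (- lam * 0) - beta * 0).
  { set (H := fun x => - (E x * exp (- lam * x) - beta * x)).
    enough (H 0 <= H s) by (unfold H in *; lra).
    apply (derive_nonneg_le H
      (fun x => - (dE x * exp (- lam * x) + E x * (- lam * exp (- lam * x)) - beta * 1)) 0 s);
      [lra | |].
    - intros x Hx. unfold H. apply is_derive_Ropp, is_derive_Rminus.
      + apply (is_derive_Rmult E (fun x => exp (- lam * x))); [apply Hd; lra | apply (is_derive_exp_scal (- lam))].
      + apply is_derive_scal, is_derive_Rid.
    - intros x Hx. pose proof (Hle x ltac:(lra)). pose proof (exp_pos (- lam * x)).
      assert (exp (- lam * x) <= 1) by (rewrite <- exp_0; apply exp_le_compat; nra).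
      nra. }
  replace (- lam * 0) with 0 in H by ring. rewrite exp_0 in H.
  assert (Hee : exp (- lam * s) * exp (lam * s) = 1)
    by (rewrite <- exp_plus; replace (- lam * s + lam * s) with 0 by ring; apply exp_0).
  pose proof (exp_pos (lam * s)).
  replace (E s) with (E s * exp (- lam * s) * exp (lam * s)) by (rewrite Rmult_assoc, Hee; ring).
  apply Rmult_le_compat_r; lra.
Qed.

Lemma le_exp_of_derive (G dG : R -> R) K c t : 0 < c -> 0 <= K ->
  (forall s, is_derive G s (dG s)) -> G 0 = 0 ->
  (forall s, Rabs (dG s) <= K * exp (c * Rabs s)) ->
  G t <= K / c * exp (c * Rabs t).
Proof.
  intros Hc HK HG HG0 Hb.
  assert (Kc : 0 <= K / c) by (apply Rdiv_le_0_compat; lra).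
  destruct (Rle_dec 0 t) as [Ht|Ht].
  - rewrite Rabs_right by lra.
    enough (- (G 0 - K / c * exp (c * 0)) <= - (G t - K / c * exp (c * t)))
      by (rewrite HG0, Rmult_0_r, exp_0 in *; pose proof (exp_pos (c * t)); nra).
    apply (derive_nonneg_le (fun s => - (G s - K / c * exp (c * s)))
             (fun s => - (dG s - K / c * (c * exp (c * s)))) 0 t); [lra | |].
    + intros x _. apply is_derive_Ropp, is_derive_Rminus; [apply HG|].
      apply is_derive_scal, is_derive_exp_scal.
    + intros x Hx. specialize (Hb x). rewrite (Rabs_right x) in Hb by lra. apply Rabs_le_between in Hb.
      replace (K / c * (c * exp (c * x))) with (K * exp (c * x)) by (field; lra). lra.
  - rewrite Rabs_left by lra.
    enough (G t - K / c * exp (- c * t) <= G 0 - K / c * exp (- c * 0))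
      by (rewrite HG0, Rmult_0_r, exp_0 in *; replace (c * - t) with (- c * t) by ring;
          pose proof (exp_pos (- c * t)); nra).
    apply (derive_nonneg_le (fun s => G s - K / c * exp (- c * s))
             (fun s => dG s - K / c * (- c * exp (- c * s))) t 0); [lra | |].
    + intros x _. apply is_derive_Rminus; [apply HG|].
      apply is_derive_scal, is_derive_exp_scal.
    + intros x Hx. specialize (Hb x). rewrite (Rabs_left x) in Hb by lra. apply Rabs_le_between in Hb.
      replace (K / c * (- c * exp (- c * x))) with (- (K * exp (c * - x)))
        by (replace (c * - x) with (- c * x) by ring; field; lra). lra.
Qed.

Lemma exp_growth_of_derive (G1 G2 dG1 dG2 : R -> R) K c t : 0 < c -> 0 <= K ->
  (forall s, is_derive G1 s (dG1 s)) -> (forall s, is_derive G2 s (dG2 s)) ->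
  G1 0 = 0 -> G2 0 = 0 ->
  (forall s, Rabs (dG1 s) + Rabs (dG2 s) <= K * exp (c * Rabs s)) ->
  Rabs (G1 t) + Rabs (G2 t) <= K / c * exp (c * Rabs t).
Proof.
  intros Hc HK H1 H2 Z1 Z2 Hb.
  set (e1 := if Rle_dec 0 (G1 t) then 1 else -1).
  set (e2 := if Rle_dec 0 (G2 t) then 1 else -1).
  assert (He : Rabs e1 = 1 /\ Rabs e2 = 1)
    by (unfold e1, e2, Rabs; split; [destruct (Rle_dec 0 (G1 t)) | destruct (Rle_dec 0 (G2 t))];
        destruct Rcase_abs; lra).
  replace (Rabs (G1 t) + Rabs (G2 t)) with (e1 * G1 t + e2 * G2 t)
    by (unfold e1, e2, Rabs; destruct (Rle_dec 0 (G1 t)), (Rle_dec 0 (G2 t));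
        repeat destruct Rcase_abs; lra).
  apply (le_exp_of_derive (fun s => e1 * G1 s + e2 * G2 s) (fun s => e1 * dG1 s + e2 * dG2 s)); auto.
  - intros s. apply is_derive_Rplus; apply is_derive_scal; auto.
  - rewrite Z1, Z2. ring.
  - intros s. eapply Rle_trans; [apply Rabs_triang|]. rewrite !Rabs_mult.
    destruct He as [-> ->]. rewrite !Rmult_1_l. apply Hb.
Qed.

Lemma uniform_limit_continuous (f : R -> R) (fn : nat -> R -> R) t K :
  (forall n, continuous (fn n) t) ->
  (forall n y, Rabs (y - t) < 1 -> Rabs (f y - fn n y) <= K * (1/2) ^ n) -> continuous f t.
Proof.
  intros Hc Hb. apply continuous_epsilon_delta. intros eps He.
  assert (HK : 0 <= K)
    by (specialize (Hb 0%nat t); rewrite Rminus_diag, Rabs_R0 in Hb; pose proof (Rabs_pos (f t - fn 0%nat t));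
        simpl in Hb; lra).
  destruct (pow_lt_1_zero (1/2)) with (y := eps / 3 / (K + 1)) as [N HN];
    [rewrite Rabs_right; lra | apply Rdiv_lt_0_compat; lra |].
  specialize (HN N (le_n N)). rewrite Rabs_right in HN by (left; apply pow_lt; lra).
  assert (HKN : K * (1/2) ^ N < eps / 3).
  { apply Rmult_lt_compat_r with (r := K + 1) in HN; [|lra].
    replace (eps / 3 / (K + 1) * (K + 1)) with (eps / 3) in HN by (field; lra).
    pose proof (pow_lt (1/2) N). nra. }
  destruct (proj1 (continuous_epsilon_delta (fn N) t) (Hc N) (eps / 3)) as [d [Hd Hy]]; [lra|].
  exists (Rmin 1 d). split; [apply Rmin_case; lra|].
  intros y Hyt.
  assert (Rabs (y - t) < 1) by (eapply Rlt_le_trans; [apply Hyt | apply Rmin_l]).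
  assert (Rabs (y - t) < d) by (eapply Rlt_le_trans; [apply Hyt | apply Rmin_r]).
  pose proof (Hb N y ltac:(assumption)) as Q1.
  pose proof (Hb N t ltac:(rewrite Rminus_diag, Rabs_R0; lra)) as Q2.
  pose proof (Hy y ltac:(assumption)) as Q3.
  replace (f y - f t) with ((f y - fn N y) + (fn N y - fn N t) - (f t - fn N t)) by ring.
  pose proof (Rabs_triang (f y - fn N y + (fn N y - fn N t)) (- (f t - fn N t))) as T1.
  pose proof (Rabs_triang (f y - fn N y) (fn N y - fn N t)) as T2. rewrite Rabs_Ropp in T1.
  unfold Rminus at 1. lra.
Qed.

Section Picard.

Variables (F1 F2 : R -> R -> R -> R) (u0 w0 : R).

Fixpoint picard_iter (n : nat) : (R -> R) * (R -> R) :=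
  match n with
  | O => (fun _ => u0, fun _ => w0)
  | S n => let p := picard_iter n in
     (fun t => u0 + RInt (fun s => F1 s (fst p s) (snd p s)) 0 t,
      fun t => w0 + RInt (fun s => F2 s (fst p s) (snd p s)) 0 t)
  end.

Local Notation pu n := (fst (picard_iter n)).
Local Notation pw n := (snd (picard_iter n)).

Definition picard_u t := real (Lim_seq (fun n => pu n t)).
Definition picard_w t := real (Lim_seq (fun n => pw n t)).

Definition system_continuous := forall u w : R -> R,
  (forall t, continuous u t) -> (forall t, continuous w t) ->
  forall t, continuous (fun s => F1 s (u s) (w s)) t /\ continuous (fun s => F2 s (u s) (w s)) t.

Definition system_lipschitz L := forall t u w u' w',
  Rabs (F1 t u w - F1 t u' w') + Rabs (F2 t u w - F2 t u' w') <= L * (Rabs (u - u') + Rabs (w - w')).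

Hypothesis Fcont : system_continuous.

Lemma picard_iter_continuous n t : continuous (pu n) t /\ continuous (pw n) t.
Proof.
  revert t. induction n as [|n IH]; intros t.
  - split; apply continuous_const.
  - pose proof (Fcont _ _ (fun t => proj1 (IH t)) (fun t => proj2 (IH t))) as Hc.
    split; eapply is_derive_continuous; apply is_derive_primitive; intros s.
    + exact (proj1 (Hc s)).
    + exact (proj2 (Hc s)).
Qed.

Lemma picard_iter_derive n t :
  is_derive (pu (S n)) t (F1 t (pu n t) (pw n t)) /\ is_derive (pw (S n)) t (F2 t (pu n t) (pw n t)).
Proof.
  pose proof (Fcont _ _ (fun t => proj1 (picard_iter_continuous n t))
                        (fun t => proj2 (picard_iter_continuous n t))) as Hc.
  split.
  - apply (is_derive_primitive (fun s => F1 s (pu n s) (pw n s))). intros s. exact (proj1 (Hc s)).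
  - apply (is_derive_primitive (fun s => F2 s (pu n s) (pw n s))). intros s. exact (proj2 (Hc s)).
Qed.

Lemma picard_iter_0 n : pu n 0 = u0 /\ pw n 0 = w0.
Proof. destruct n; simpl; auto. split; apply primitive_base. Qed.

Variables (L B : R).
Hypotheses (HL : 0 < L) (HB : 0 <= B) (Flip : system_lipschitz L).
Hypothesis Fbound : forall t, Rabs (F1 t u0 w0) + Rabs (F2 t u0 w0) <= B.

(* The weight exp (2 L |t|) makes the Picard map a contraction of ratio 1/2 on the whole line. *)
Lemma picard_iter_step n t :
  Rabs (pu (S n) t - pu n t) + Rabs (pw (S n) t - pw n t) <= B / (2 * L) * (1/2) ^ n * exp (2 * L * Rabs t).
Proof.
  revert t. induction n as [|n IH]; intros t.
  - simpl pow. rewrite Rmult_1_r.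
    apply (exp_growth_of_derive (fun s => pu 1 s - u0) (fun s => pw 1 s - w0)
                                (fun s => F1 s u0 w0 - 0) (fun s => F2 s u0 w0 - 0)); try lra.
    + intros s. apply is_derive_Rminus; [apply (picard_iter_derive 0) | exact (is_derive_const u0 s)].
    + intros s. apply is_derive_Rminus; [apply (picard_iter_derive 0) | exact (is_derive_const w0 s)].
    + destruct (picard_iter_0 1) as [-> _]. ring.
    + destruct (picard_iter_0 1) as [_ ->]. ring.
    + intros s. rewrite !Rminus_0_r. specialize (Fbound s).
      assert (1 <= exp (2 * L * Rabs s))
        by (rewrite <- exp_0; apply exp_le_compat; pose proof (Rabs_pos s); nra).
      nra.
  - replace (B / (2 * L) * (1 / 2) ^ S n) with (L * (B / (2 * L) * (1/2) ^ n) / (2 * L))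
      by (simpl; field; lra).
    apply (exp_growth_of_derive (fun s => pu (S (S n)) s - pu (S n) s)
             (fun s => pw (S (S n)) s - pw (S n) s)
             (fun s => F1 s (pu (S n) s) (pw (S n) s) - F1 s (pu n s) (pw n s))
             (fun s => F2 s (pu (S n) s) (pw (S n) s) - F2 s (pu n s) (pw n s))); try lra.
    + pose proof (pow_le (1/2) n). assert (0 <= B / (2 * L)) by (apply Rdiv_le_0_compat; lra).
      apply Rmult_le_pos; [lra|]. apply Rmult_le_pos; lra.
    + intros s. apply is_derive_Rminus; apply picard_iter_derive.
    + intros s. apply is_derive_Rminus; apply picard_iter_derive.
    + destruct (picard_iter_0 (S (S n))) as [-> _]. destruct (picard_iter_0 (S n)) as [-> _]. ring.
    + destruct (picard_iter_0 (S (S n))) as [_ ->]. destruct (picard_iter_0 (S n)) as [_ ->]. ring.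
    + intros s. eapply Rle_trans; [apply Flip|]. rewrite Rmult_assoc.
      apply Rmult_le_compat_l; [lra | apply IH].
Qed.

Lemma picard_iter_cauchy n j t :
  Rabs (pu (n + j)%nat t - pu n t) + Rabs (pw (n + j)%nat t - pw n t)
    <= B / L * (1/2) ^ n * (1 - (1/2) ^ j) * exp (2 * L * Rabs t).
Proof.
  induction j as [|j IH].
  - rewrite Nat.add_0_r, !Rminus_diag, Rabs_R0. simpl. lra.
  - replace (n + S j)%nat with (S (n + j)) by lia.
    pose proof (picard_iter_step (n + j) t) as Hd. rewrite pow_add in Hd.
    pose proof (Rabs_triang (pu (S (n + j)) t - pu (n + j)%nat t) (pu (n + j)%nat t - pu n t)).
    pose proof (Rabs_triang (pw (S (n + j)) t - pw (n + j)%nat t) (pw (n + j)%nat t - pw n t)).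
    replace (pu (S (n + j)) t - pu (n + j)%nat t + (pu (n + j)%nat t - pu n t))
      with (pu (S (n + j)) t - pu n t) in * by ring.
    replace (pw (S (n + j)) t - pw (n + j)%nat t + (pw (n + j)%nat t - pw n t))
      with (pw (S (n + j)) t - pw n t) in * by ring.
    assert (B / (2 * L) * ((1 / 2) ^ n * (1 / 2) ^ j) * exp (2 * L * Rabs t) +
            B / L * (1 / 2) ^ n * (1 - (1 / 2) ^ j) * exp (2 * L * Rabs t) =
            B / L * (1 / 2) ^ n * (1 - (1 / 2) ^ S j) * exp (2 * L * Rabs t)) by (simpl; field; lra).
    lra.
Qed.

Lemma picard_iter_cvg t : is_lim_seq (fun n => pu n t) (picard_u t) /\ is_lim_seq (fun n => pw n t) (picard_w t).
Proof.
  set (K := B / L * exp (2 * L * Rabs t)).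
  assert (HK : 0 <= K) by (apply Rmult_le_pos; [apply Rdiv_le_0_compat; lra | left; apply exp_pos]).
  assert (Hcau : forall eps : posreal, exists N, forall n m, (N <= n)%nat -> (N <= m)%nat ->
     Rabs (pu n t - pu m t) < eps /\ Rabs (pw n t - pw m t) < eps).
  { intros eps. destruct (pow_lt_1_zero (1/2)) with (y := eps / (K + 1)) as [N HN];
      [rewrite Rabs_right; lra | apply Rdiv_lt_0_compat; [apply cond_pos | lra] |].
    exists N.
    assert (Hgen : forall n m, (N <= n)%nat -> (n <= m)%nat ->
      Rabs (pu m t - pu n t) < eps /\ Rabs (pw m t - pw n t) < eps).
    { intros n m Hn Hnm. replace m with (n + (m - n))%nat by lia.
      pose proof (picard_iter_cauchy n (m - n) t) as H.
      specialize (HN n Hn). rewrite Rabs_right in HN by (left; apply pow_lt; lra).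
      assert (0 < (1/2) ^ (m - n)) by (apply pow_lt; lra).
      assert (0 < (1/2) ^ n) by (apply pow_lt; lra).
      assert (B / L * (1 / 2) ^ n * (1 - (1 / 2) ^ (m - n)) * exp (2 * L * Rabs t) <= K * (1/2) ^ n).
      { unfold K. assert (0 <= B / L * (1/2) ^ n * exp (2 * L * Rabs t))
          by (apply Rmult_le_pos; [apply Rmult_le_pos; [apply Rdiv_le_0_compat|]; lra | left; apply exp_pos]).
        nra. }
      assert (K * (1/2) ^ n < eps).
      { apply Rmult_lt_compat_r with (r := K + 1) in HN; [|lra].
        replace (eps / (K + 1) * (K + 1)) with (pos eps) in HN by (field; lra). nra. }
      pose proof (Rabs_pos (pu (n + (m - n))%nat t - pu n t)).
      pose proof (Rabs_pos (pw (n + (m - n))%nat t - pw n t)).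
      split; lra. }
    intros n m Hn Hm. destruct (Nat.le_ge_cases n m) as [Hnm|Hnm].
    - destruct (Hgen n m Hn Hnm). split; rewrite Rabs_minus_sym; auto.
    - apply (Hgen m n Hm Hnm). }
  split.
  - assert (Hex : ex_finite_lim_seq (fun n => pu n t)).
    { apply ex_lim_seq_cauchy_corr. intros eps. destruct (Hcau eps) as [N HN].
      exists N. intros n m Hn Hm. apply (HN n m Hn Hm). }
    destruct Hex as [l Hlim]. unfold picard_u. rewrite (is_lim_seq_unique _ _ Hlim). exact Hlim.
  - assert (Hex : ex_finite_lim_seq (fun n => pw n t)).
    { apply ex_lim_seq_cauchy_corr. intros eps. destruct (Hcau eps) as [N HN].
      exists N. intros n m Hn Hm. apply (HN n m Hn Hm). }
    destruct Hex as [l Hlim]. unfold picard_w. rewrite (is_lim_seq_unique _ _ Hlim). exact Hlim.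
Qed.

Lemma picard_iter_error n t :
  Rabs (picard_u t - pu n t) + Rabs (picard_w t - pw n t) <= B / L * (1/2) ^ n * exp (2 * L * Rabs t).
Proof.
  destruct (picard_iter_cvg t) as [H1 H2].
  apply (is_lim_seq_incr_n _ n) in H1. apply (is_lim_seq_incr_n _ n) in H2.
  apply (is_lim_seq_le (fun j => Rabs (pu (j + n)%nat t - pu n t) + Rabs (pw (j + n)%nat t - pw n t))
           (fun _ => B / L * (1/2) ^ n * exp (2 * L * Rabs t))
           (Rabs (picard_u t - pu n t) + Rabs (picard_w t - pw n t))
           (B / L * (1/2) ^ n * exp (2 * L * Rabs t))).
  - intros j. rewrite Nat.add_comm. eapply Rle_trans; [apply picard_iter_cauchy|].
    assert (0 <= B / L * (1/2) ^ n * exp (2 * L * Rabs t))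
      by (apply Rmult_le_pos; [apply Rmult_le_pos; [apply Rdiv_le_0_compat | apply pow_le]; lra | left; apply exp_pos]).
    assert (0 < (1/2) ^ j) by (apply pow_lt; lra). nra.
  - apply is_lim_seq_plus';
      [apply (is_lim_seq_abs _ (picard_u t - pu n t)) | apply (is_lim_seq_abs _ (picard_w t - pw n t))];
      apply is_lim_seq_minus'; auto; apply is_lim_seq_const.
  - apply is_lim_seq_const.
Qed.

Lemma picard_continuous t : continuous picard_u t /\ continuous picard_w t.
Proof.
  set (K := B / L * exp (2 * L * (Rabs t + 1))).
  assert (Hbd : forall n y, Rabs (y - t) < 1 ->
    Rabs (picard_u y - pu n y) + Rabs (picard_w y - pw n y) <= K * (1/2) ^ n).
  { intros n y Hy. eapply Rle_trans; [apply picard_iter_error|].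
    assert (exp (2 * L * Rabs y) <= exp (2 * L * (Rabs t + 1))).
    { apply exp_le_compat. pose proof (Rabs_triang_inv y t). nra. }
    assert (0 <= B / L * (1/2) ^ n) by (apply Rmult_le_pos; [apply Rdiv_le_0_compat | apply pow_le]; lra).
    unfold K. nra. }
  split.
  - apply (uniform_limit_continuous _ (fun n => pu n) t K).
    + intros n. apply picard_iter_continuous.
    + intros n y Hy. specialize (Hbd n y Hy). pose proof (Rabs_pos (picard_w y - pw n y)). lra.
  - apply (uniform_limit_continuous _ (fun n => pw n) t K).
    + intros n. apply picard_iter_continuous.
    + intros n y Hy. specialize (Hbd n y Hy). pose proof (Rabs_pos (picard_u y - pu n y)). lra.
Qed.

Lemma picard_map_error n t :
  Rabs (pu (S n) t - (u0 + RInt (fun s => F1 s (picard_u s) (picard_w s)) 0 t)) +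
  Rabs (pw (S n) t - (w0 + RInt (fun s => F2 s (picard_u s) (picard_w s)) 0 t))
    <= B * (1/2) ^ n / (2 * L) * exp (2 * L * Rabs t).
Proof.
  pose proof (Fcont _ _ (fun t => proj1 (picard_continuous t)) (fun t => proj2 (picard_continuous t))) as Hc.
  apply (exp_growth_of_derive
           (fun t => pu (S n) t - (u0 + RInt (fun s => F1 s (picard_u s) (picard_w s)) 0 t))
           (fun t => pw (S n) t - (w0 + RInt (fun s => F2 s (picard_u s) (picard_w s)) 0 t))
           (fun s => F1 s (pu n s) (pw n s) - F1 s (picard_u s) (picard_w s))
           (fun s => F2 s (pu n s) (pw n s) - F2 s (picard_u s) (picard_w s)));
    [lra | apply Rmult_le_pos; [lra | apply pow_le; lra] | | | | | ].
  - intros s. apply is_derive_Rminus; [apply picard_iter_derive|].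
    apply (is_derive_primitive (fun s => F1 s (picard_u s) (picard_w s))). intros; apply Hc.
  - intros s. apply is_derive_Rminus; [apply picard_iter_derive|].
    apply (is_derive_primitive (fun s => F2 s (picard_u s) (picard_w s))). intros; apply Hc.
  - rewrite primitive_base, (proj1 (picard_iter_0 (S n))). ring.
  - rewrite primitive_base, (proj2 (picard_iter_0 (S n))). ring.
  - intros s. eapply Rle_trans; [apply Flip|].
    rewrite (Rabs_minus_sym _ (picard_u s)), (Rabs_minus_sym _ (picard_w s)).
    eapply Rle_trans; [apply Rmult_le_compat_l; [lra | apply (picard_iter_error n s)]|].
    right. field. lra.
Qed.

Lemma picard_integral_equation t :
  picard_u t = u0 + RInt (fun s => F1 s (picard_u s) (picard_w s)) 0 t /\
  picard_w t = w0 + RInt (fun s => F2 s (picard_u s) (picard_w s)) 0 t.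
Proof.
  set (I1 := u0 + RInt (fun s => F1 s (picard_u s) (picard_w s)) 0 t).
  set (I2 := w0 + RInt (fun s => F2 s (picard_u s) (picard_w s)) 0 t).
  set (C := B / L * exp (2 * L * Rabs t)).
  assert (Hn : forall n, Rabs (picard_u t - I1) + Rabs (picard_w t - I2) <= C * (1/2) ^ n).
  { intros n.
    pose proof (picard_iter_error (S n) t). pose proof (picard_map_error n t) as Hm. fold I1 I2 in Hm.
    pose proof (Rabs_triang (picard_u t - pu (S n) t) (pu (S n) t - I1)).
    pose proof (Rabs_triang (picard_w t - pw (S n) t) (pw (S n) t - I2)).
    replace (picard_u t - pu (S n) t + (pu (S n) t - I1)) with (picard_u t - I1) in * by ring.
    replace (picard_w t - pw (S n) t + (pw (S n) t - I2)) with (picard_w t - I2) in * by ring.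
    replace (C * (1 / 2) ^ n) with
      (B / L * (1 / 2) ^ S n * exp (2 * L * Rabs t) + B * (1 / 2) ^ n / (2 * L) * exp (2 * L * Rabs t))
      by (unfold C; simpl; field; lra).
    lra. }
  split; apply Rminus_diag_uniq; apply (le_geometric_eq0 _ C); intros n; specialize (Hn n);
    pose proof (Rabs_pos (picard_u t - I1)); pose proof (Rabs_pos (picard_w t - I2)); lra.
Qed.

Theorem picard_solution :
  (forall t, is_derive picard_u t (F1 t (picard_u t) (picard_w t))) /\
  (forall t, is_derive picard_w t (F2 t (picard_u t) (picard_w t))) /\
  picard_u 0 = u0 /\ picard_w 0 = w0.
Proof.
  pose proof (Fcont _ _ (fun t => proj1 (picard_continuous t)) (fun t => proj2 (picard_continuous t))) as Hc.
  split; [|split; [|split]].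
  - intros t. apply (is_derive_ext (fun t => u0 + RInt (fun s => F1 s (picard_u s) (picard_w s)) 0 t)).
    + intros; symmetry; apply picard_integral_equation.
    + apply (is_derive_primitive (fun s => F1 s (picard_u s) (picard_w s))). intros; apply Hc.
  - intros t. apply (is_derive_ext (fun t => w0 + RInt (fun s => F2 s (picard_u s) (picard_w s)) 0 t)).
    + intros; symmetry; apply picard_integral_equation.
    + apply (is_derive_primitive (fun s => F2 s (picard_u s) (picard_w s))). intros; apply Hc.
  - rewrite (proj1 (picard_integral_equation 0)). apply primitive_base.
  - rewrite (proj2 (picard_integral_equation 0)). apply primitive_base.
Qed.

End Picard.

Lemma clamp01_lipschitz a b : Rabs (Rmin 1 (Rmax 0 a) - Rmin 1 (Rmax 0 b)) <= Rabs (a - b).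
Proof. unfold Rmin, Rmax; repeat destruct Rle_dec; unfold Rabs; repeat destruct Rcase_abs; lra. Qed.

Section Cutoff.

Variable eta : R.
Hypothesis Heta : 0 < eta.

(* [cutoff] is C^1 with Lipschitz derivative [ramp], is the identity on [[2 eta, +oo[], and never
   goes below [eta]. *)
Definition ramp x := Rmin 1 (Rmax 0 ((x - eta) / eta)).
Definition cutoff x := 2 * eta + RInt ramp (2 * eta) x.

Lemma ramp_range x : 0 <= ramp x <= 1.
Proof. unfold ramp, Rmin, Rmax; repeat destruct Rle_dec; lra. Qed.

Lemma ramp_low x : x <= eta -> ramp x = 0.
Proof.
  intros Hx. unfold ramp.
  assert ((x - eta) / eta <= 0) by (unfold Rdiv; pose proof (Rinv_0_lt_compat eta Heta); nra).
  unfold Rmin, Rmax; repeat destruct Rle_dec; lra.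
Qed.

Lemma ramp_high x : 2 * eta <= x -> ramp x = 1.
Proof.
  intros Hx. unfold ramp.
  assert (1 <= (x - eta) / eta)
    by (apply Rmult_le_reg_r with eta; [lra|]; unfold Rdiv; rewrite Rmult_assoc, Rinv_l; lra).
  unfold Rmin, Rmax; repeat destruct Rle_dec; lra.
Qed.

Lemma ramp_lipschitz x y : Rabs (ramp x - ramp y) <= / eta * Rabs (x - y).
Proof.
  unfold ramp. eapply Rle_trans; [apply clamp01_lipschitz|].
  replace ((x - eta) / eta - (y - eta) / eta) with (/ eta * (x - y)) by (field; lra).
  rewrite Rabs_mult, Rabs_right; [lra | left; apply Rinv_0_lt_compat; lra].
Qed.

Lemma ramp_continuous x : continuous ramp x.
Proof.
  apply (lipschitz_continuous _ (/ eta)); [left; apply Rinv_0_lt_compat; lra|].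
  intros y. apply ramp_lipschitz.
Qed.

Lemma is_derive_cutoff x : is_derive cutoff x (ramp x).
Proof. apply (is_derive_primitive ramp). apply ramp_continuous. Qed.

Lemma cutoff_continuous x : continuous cutoff x.
Proof. exact (is_derive_continuous _ _ _ (is_derive_cutoff x)). Qed.

Lemma cutoff_2eta : cutoff (2 * eta) = 2 * eta.
Proof. apply primitive_base. Qed.

Lemma cutoff_incr x y : x <= y -> cutoff x <= cutoff y.
Proof.
  intros Hxy. apply (derive_nonneg_le _ ramp); auto.
  - intros; apply is_derive_cutoff.
  - intros; apply ramp_range.
Qed.

Lemma cutoff_id x : 2 * eta <= x -> cutoff x = x.
Proof.
  intros Hx. enough (cutoff (2 * eta) - 2 * eta = cutoff x - x) by (rewrite cutoff_2eta in *; lra).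
  apply (derive_zero_eq (fun s => cutoff s - s) (fun s => ramp s - 1)); auto.
  - intros s Hs. apply is_derive_Rminus; [apply is_derive_cutoff | apply is_derive_Rid].
  - intros s Hs. rewrite ramp_high; lra.
Qed.

Lemma cutoff_ge x : eta <= cutoff x.
Proof.
  assert (H1 : eta <= cutoff eta).
  { destruct (mean_value cutoff ramp eta (2 * eta)) as [c [Hc E]]; [lra | intros; apply is_derive_cutoff |].
    rewrite cutoff_2eta in E. pose proof (ramp_range c). nra. }
  destruct (Rle_dec eta x).
  - pose proof (cutoff_incr eta x r). lra.
  - enough (cutoff x = cutoff eta) by lra.
    apply (derive_zero_eq cutoff ramp); [lra | intros; apply is_derive_cutoff |].
    intros s Hs. apply ramp_low; lra.
Qed.

Lemma cutoff_lipschitz x y : Rabs (cutoff x - cutoff y) <= Rabs (x - y).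
Proof.
  rewrite <- (Rmult_1_l (Rabs (x - y))).
  apply (lipschitz_of_derive_bound_R cutoff ramp); [apply is_derive_cutoff|].
  intros s. pose proof (ramp_range s). rewrite Rabs_right; lra.
Qed.

Lemma cutoff_bound x R0 : Rabs x <= R0 -> eta <= cutoff x <= Rmax R0 (2 * eta).
Proof.
  intros Hx. split; [apply cutoff_ge|].
  destruct (Rle_dec x (2 * eta)).
  - eapply Rle_trans; [apply cutoff_incr; eauto | rewrite cutoff_2eta; apply Rmax_r].
  - rewrite cutoff_id by lra. eapply Rle_trans; [|apply Rmax_l]. pose proof (Rle_abs x). lra.
Qed.

End Cutoff.

Lemma inv_cube_lipschitz eta a b : 0 < eta -> eta <= a -> eta <= b ->
  Rabs (/ a ^ 3 - / b ^ 3) <= 3 / eta ^ 4 * Rabs (a - b).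
Proof.
  intros He Ha Hb.
  apply (lipschitz_of_derive_bound (fun y => / y ^ 3) (fun y => - 3 / y ^ 4) _ (Rmin a b) (Rmax a b)).
  - split; [apply Rmin_l | apply Rmax_l].
  - split; [apply Rmin_r | apply Rmax_r].
  - intros s Hs. assert (eta <= s) by (eapply Rle_trans; [|apply Hs]; apply Rmin_case; lra).
    auto_derive; [intro Z; assert (0 < s * s) by nra; nra | field; lra].
  - intros s Hs. assert (eta <= s) by (eapply Rle_trans; [|apply Hs]; apply Rmin_case; lra).
    assert (0 < eta ^ 4) by (apply pow_lt; lra). assert (eta ^ 4 <= s ^ 4) by (apply pow_incr; lra).
    replace (-3 / s ^ 4) with (- (3 * / s ^ 4)) by (field; intro Z; nra).
    assert (0 < / s ^ 4) by (apply Rinv_0_lt_compat; lra).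
    rewrite Rabs_Ropp, Rabs_right by lra. unfold Rdiv.
    apply Rmult_le_compat_l; [lra | apply Rinv_le_contravar; lra].
Qed.

Lemma pair_energy_rate a b c d K N : 0 <= K -> 0 <= N ->
  Rabs c <= K * Rabs a -> Rabs d <= N * Rabs a ->
  2 * a * (b + c) + 2 * b * d <= (1 + 2 * K + N) * (a ^ 2 + b ^ 2).
Proof.
  intros HK HN Hc Hd.
  assert (ac : a * c <= K * a ^ 2).
  { apply Rle_trans with (Rabs a * Rabs c); [rewrite <- Rabs_mult; apply Rle_abs|].
    rewrite <- pow2_abs. pose proof (Rabs_pos a). simpl. nra. }
  assert (bd : b * d <= N * Rabs a * Rabs b).
  { apply Rle_trans with (Rabs b * Rabs d); [rewrite <- Rabs_mult; apply Rle_abs|].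
    pose proof (Rabs_pos b). nra. }
  assert (ab : 2 * (Rabs a * Rabs b) <= a ^ 2 + b ^ 2).
  { rewrite <- (pow2_abs a), <- (pow2_abs b). pose proof (pow2_ge_0 (Rabs a - Rabs b)). nra. }
  assert (ab' : a * b <= Rabs a * Rabs b) by (rewrite <- Rabs_mult; apply Rle_abs).
  pose proof (pow2_ge_0 a). pose proof (pow2_ge_0 b).
  nra.
Qed.

Lemma error_energy_rate x1 x2 r1 r2 k1 k2 K N : 0 <= k1 <= K -> 0 <= k2 <= N ->
  2 * x1 * (x2 + r1 + k1 * x1) + 2 * x2 * (r2 + k2 * x1)
    <= (2 + 2 * K + N) * (x1 ^ 2 + x2 ^ 2) + (r1 ^ 2 + r2 ^ 2).
Proof.
  intros Hk1 Hk2.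
  assert (T1 : 2 * x1 * x2 <= x1 ^ 2 + x2 ^ 2) by (pose proof (pow2_ge_0 (x1 - x2)); nra).
  assert (T1' : - (2 * x1 * x2) <= x1 ^ 2 + x2 ^ 2) by (pose proof (pow2_ge_0 (x1 + x2)); nra).
  assert (T2 : 2 * x1 * r1 <= x1 ^ 2 + r1 ^ 2) by (pose proof (pow2_ge_0 (x1 - r1)); nra).
  assert (T3 : 2 * x2 * r2 <= x2 ^ 2 + r2 ^ 2) by (pose proof (pow2_ge_0 (x2 - r2)); nra).
  assert (T4 : k1 * x1 ^ 2 <= K * x1 ^ 2) by (pose proof (pow2_ge_0 x1); nra).
  assert (T5 : k2 * (2 * x1 * x2) <= N * (x1 ^ 2 + x2 ^ 2))
    by (apply Rle_trans with (k2 * (x1 ^ 2 + x2 ^ 2)); [apply Rmult_le_compat_l | apply Rmult_le_compat_r]; lra).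
  pose proof (pow2_ge_0 x1). pose proof (pow2_ge_0 x2).
  assert (0 <= K * x2 ^ 2) by nra.
  replace (2 * x1 * (x2 + r1 + k1 * x1) + 2 * x2 * (r2 + k2 * x1)) with
    (2 * x1 * x2 + 2 * x1 * r1 + 2 * (k1 * x1 ^ 2) + 2 * x2 * r2 + k2 * (2 * x1 * x2)) by ring.
  nra.
Qed.

(* The sign argument uses the integrating factor [exp (- int k1)]: while [b < 0], [a] decreases
   from 0, and while [a <= 0], [b] decreases from -1. *)
Lemma linear_system_neg (a b k1 k2 : R -> R) S : 0 < S ->
  (forall t, continuous k1 t) -> (forall t, 0 <= k2 t) ->
  (forall t, is_derive a t (k1 t * a t + b t)) -> (forall t, is_derive b t (k2 t * a t)) ->
  a 0 = 0 -> b 0 = -1 -> a S < 0.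
Proof.
  intros HS Hk1 Hk2 Ha Hb Ha0 Hb0.
  set (Kf := fun t => 0 + RInt k1 0 t).
  set (Q := fun t => a t * exp (- Kf t)).
  assert (HQ : forall t, is_derive Q t (b t * exp (- Kf t))).
  { intros t. unfold Q.
    apply (is_derive_val _ _ ((k1 t * a t + b t) * exp (- Kf t) + a t * (- k1 t * exp (- Kf t)))); [ring|].
    apply (is_derive_Rmult a (fun t => exp (- Kf t))); [apply Ha|].
    apply (is_derive_Rcomp exp (fun t => - Kf t)); [apply is_derive_exp|].
    apply is_derive_Ropp, (is_derive_primitive k1); auto. }
  assert (HQ0 : Q 0 = 0) by (unfold Q; rewrite Ha0; ring).
  assert (Hbneg : forall s, 0 <= s <= S -> b s + 1/2 < 0).
  { apply continuous_induction; [lra | | rewrite Hb0; lra |].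
    - intros x _. apply (continuous_plus b (fun _ => 1/2)); [|apply continuous_const].
      eapply is_derive_continuous; apply Hb.
    - intros s Hs Hbel.
      assert (Hale : forall x, 0 <= x <= s -> a x <= 0).
      { intros x Hx. enough (Q x <= Q 0) by (unfold Q in *; rewrite Ha0 in *; pose proof (exp_pos (- Kf x)); nra).
        enough (- Q 0 <= - Q x) by lra.
        apply (derive_nonneg_le (fun t => - Q t) (fun t => - (b t * exp (- Kf t))) 0 x); [lra | |].
        + intros; apply is_derive_Ropp; auto.
        + intros y Hy. pose proof (Hbel y ltac:(lra)). pose proof (exp_pos (- Kf y)). nra. }
      enough (b s <= b 0) by lra.
      enough (- b 0 <= - b s) by lra.
      apply (derive_nonneg_le (fun t => - b t) (fun t => - (k2 t * a t)) 0 s); [lra | |].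
      + intros; apply is_derive_Ropp; auto.
      + intros y Hy. pose proof (Hale y ltac:(lra)). pose proof (Hk2 y). nra. }
  assert (Q S < Q 0).
  { enough (- Q 0 < - Q S) by lra.
    apply (derive_pos_lt (fun t => - Q t) (fun t => - (b t * exp (- Kf t))) 0 S); [lra | |].
    - intros; apply is_derive_Ropp; auto.
    - intros y Hy. pose proof (Hbneg y ltac:(lra)). pose proof (exp_pos (- Kf y)). nra. }
  rewrite HQ0 in H. unfold Q in H. pose proof (exp_pos (- Kf S)). nra.
Qed.

Lemma is_derive_of_quadratic_error (f : R -> R) v l Q : 0 <= Q ->
  (forall h, Rabs h <= 1 -> (f (v + h) - f v - h * l) ^ 2 <= Q * h ^ 4) -> is_derive f v l.
Proof.
  intros HQ Herr. apply is_derive_Reals. intros eps Heps.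
  assert (Hd0 : 0 < Rmin 1 (eps / (Q + 1))) by (apply Rmin_case; [lra | apply Rdiv_lt_0_compat; lra]).
  exists (mkposreal _ Hd0). intros h Hh0 Hhd. simpl in Hhd.
  assert (Hh1 : Rabs h <= 1) by (left; eapply Rlt_le_trans; [apply Hhd | apply Rmin_l]).
  assert (Hh2 : Rabs h < eps / (Q + 1)) by (eapply Rlt_le_trans; [apply Hhd | apply Rmin_r]).
  specialize (Herr h Hh1).
  set (e := f (v + h) - f v - h * l) in *.
  assert (He1 : Rabs e <= (Q + 1) * h ^ 2).
  { apply abs_le_of_sqr_le; [pose proof (pow2_ge_0 h); nra|].
    replace (((Q + 1) * h ^ 2) ^ 2) with ((Q + 1) ^ 2 * h ^ 4) by ring.
    assert (0 <= h ^ 4) by (replace 4%nat with (2 * 2)%nat by reflexivity; rewrite pow_mult; apply pow2_ge_0).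
    nra. }
  replace ((f (v + h) - f v) / h - l) with (e / h) by (unfold e; field; auto).
  unfold Rdiv. rewrite Rabs_mult, Rabs_inv.
  assert (0 < Rabs h) by (apply Rabs_pos_lt; auto).
  apply Rle_lt_trans with ((Q + 1) * Rabs h).
  - apply Rmult_le_reg_r with (Rabs h); auto. rewrite Rmult_assoc, Rinv_l by lra.
    replace ((Q + 1) * Rabs h * Rabs h) with ((Q + 1) * h ^ 2) by (rewrite <- pow2_abs; ring). lra.
  - apply Rmult_lt_compat_r with (r := Q + 1) in Hh2; [|lra].
    replace (eps / (Q + 1) * (Q + 1)) with eps in Hh2 by (field; lra). lra.
Qed.

Lemma taylor1_remainder_sq (g dg : R -> R) K x y B : 0 <= K ->
  (forall s, Rmin x y <= s <= Rmax x y -> is_derive g s (dg s)) ->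
  (forall s, Rmin x y <= s <= Rmax x y -> Rabs (dg s - dg x) <= K * Rabs (s - x)) ->
  (y - x) ^ 2 <= B -> (g y - g x - dg x * (y - x)) ^ 2 <= K ^ 2 * B ^ 2.
Proof.
  intros HK Hd Hk HB.
  pose proof (taylor1_remainder g dg K x y Hd Hk) as Hr.
  rewrite <- pow2_abs. replace (K ^ 2 * B ^ 2) with ((K * B) ^ 2) by ring.
  apply pow_incr. split; [apply Rabs_pos|].
  eapply Rle_trans; [apply Hr | apply Rmult_le_compat_l; auto].
Qed.

Section Damping.

Variables (delta : R -> R) (M rB : R).
Hypotheses (delta_ge0 : forall x, 0 < x -> 0 <= delta x) (delta_le : forall x, 0 < x -> delta x <= M).
Hypotheses (delta_derive : forall x, 0 < x -> ex_derive delta x)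
           (delta_C1 : forall x, 0 < x -> continuous (Derive delta) x).
Hypothesis HrB : 0 < rB.

Lemma damping_bound_ge0 : 0 <= M.
Proof. pose proof (delta_ge0 1 ltac:(lra)). pose proof (delta_le 1 ltac:(lra)). lra. Qed.

Lemma delta_continuous x : 0 < x -> continuous delta x.
Proof. intros Hx. destruct (delta_derive x Hx) as [l Hl]. eapply is_derive_continuous; eauto. Qed.

Lemma delta_lipschitz_on a b : 0 < a -> a <= b ->
  exists K, 0 <= K /\ forall x y, a <= x <= b -> a <= y <= b -> Rabs (delta x - delta y) <= K * Rabs (x - y).
Proof.
  intros Ha Hab.
  destruct (continuity_ab_maj (fun x => Rabs (Derive delta x)) a b Hab) as [m [Hm _]].
  { intros c Hc. apply continuity_pt_filterlim, (continuous_Rabs_comp (Derive delta)), delta_C1; lra. }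
  exists (Rabs (Derive delta m)). split; [apply Rabs_pos|].
  intros x y Hx Hy. apply (lipschitz_of_derive_bound delta (Derive delta) _ a b); auto.
  intros s Hs. apply Derive_correct, delta_derive; lra.
Qed.

Definition Dprim x := RInt delta rB x.

Lemma is_derive_Dprim x : 0 < x -> is_derive Dprim x (delta x).
Proof.
  intros Hx. apply (is_derive_RInt delta (RInt delta rB) rB x); [|apply delta_continuous; auto].
  exists (mkposreal (x / 2) ltac:(lra)). intros b Hb.
  unfold ball in Hb; simpl in Hb; unfold AbsRing_ball, abs, minus, plus, opp in Hb; simpl in Hb.
  apply Rabs_def2 in Hb.
  apply (@RInt_correct R_CompleteNormedModule), (@ex_RInt_continuous R_CompleteNormedModule).
  intros z Hz. apply delta_continuous.
  assert (0 < Rmin rB b) by (apply Rmin_case; lra). lra.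
Qed.

Lemma Dprim_rB : Dprim rB = 0.
Proof. unfold Dprim. rewrite RInt_point. reflexivity. Qed.

Lemma Dprim_incr x y : 0 < x -> x <= y -> Dprim x <= Dprim y.
Proof.
  intros Hx Hxy. apply (derive_nonneg_le Dprim delta x y); auto.
  - intros; apply is_derive_Dprim; lra.
  - intros; apply delta_ge0; lra.
Qed.

Section Truncation.

Variable eta : R.
Hypothesis Heta : 0 < eta.

Definition Dcut x := Dprim (cutoff eta x).
Definition Dcut' x := delta (cutoff eta x) * ramp eta x.
Definition Gcut x := - / cutoff eta x ^ 2.
Definition Gcut' x := 2 * ramp eta x / cutoff eta x ^ 3.

Lemma Dcut_above x : 2 * eta <= x -> Dcut x = Dprim x.
Proof. intros Hx. unfold Dcut. rewrite cutoff_id; auto. Qed.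

Lemma Dcut'_above x : 2 * eta <= x -> Dcut' x = delta x.
Proof. intros Hx. unfold Dcut'. rewrite cutoff_id, ramp_high; auto. ring. Qed.

Lemma Gcut_above x : 2 * eta <= x -> Gcut x = - / x ^ 2.
Proof. intros Hx. unfold Gcut. rewrite cutoff_id; auto. Qed.

Lemma is_derive_Dcut x : is_derive Dcut x (Dcut' x).
Proof.
  unfold Dcut, Dcut'. apply (is_derive_val _ _ (ramp eta x * delta (cutoff eta x))); [apply Rmult_comm|].
  apply (is_derive_Rcomp Dprim (cutoff eta)); [|apply is_derive_cutoff; auto].
  apply is_derive_Dprim. pose proof (cutoff_ge eta Heta x); lra.
Qed.

Lemma is_derive_Gcut x : is_derive Gcut x (Gcut' x).
Proof.
  pose proof (cutoff_ge eta Heta x).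
  unfold Gcut, Gcut'. apply (is_derive_val _ _ (ramp eta x * (2 / cutoff eta x ^ 3))); [field; nra|].
  apply (is_derive_Rcomp (fun y => - / y ^ 2) (cutoff eta)); [|apply is_derive_cutoff; auto].
  auto_derive; [intro Z; nra | field; nra].
Qed.

Lemma Dcut'_range x : 0 <= Dcut' x <= M.
Proof.
  unfold Dcut'. pose proof (cutoff_ge eta Heta x). pose proof (ramp_range eta x).
  pose proof (delta_ge0 (cutoff eta x) ltac:(lra)). pose proof (delta_le (cutoff eta x) ltac:(lra)).
  split; nra.
Qed.

Lemma Gcut'_range x : 0 <= Gcut' x <= 2 / eta ^ 3.
Proof.
  unfold Gcut'. pose proof (cutoff_ge eta Heta x). pose proof (ramp_range eta x).
  assert (0 < eta ^ 3) by (apply pow_lt; lra).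
  assert (eta ^ 3 <= cutoff eta x ^ 3) by (apply pow_incr; lra).
  split; [apply Rdiv_le_0_compat; lra|].
  unfold Rdiv. apply Rmult_le_compat; [lra | left; apply Rinv_0_lt_compat; lra | lra |].
  apply Rinv_le_contravar; lra.
Qed.

Lemma Gcut_range x : - / eta ^ 2 <= Gcut x < 0.
Proof.
  unfold Gcut. pose proof (cutoff_ge eta Heta x).
  assert (0 < eta ^ 2) by (apply pow_lt; lra).
  assert (eta ^ 2 <= cutoff eta x ^ 2) by (apply pow_incr; lra).
  assert (0 < / cutoff eta x ^ 2) by (apply Rinv_0_lt_compat; lra).
  split; [apply Ropp_le_contravar, Rinv_le_contravar|]; lra.
Qed.

Lemma Dcut_ge x : eta <= rB -> - (M * rB) <= Dcut x.
Proof.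
  intros HerB. unfold Dcut. pose proof (cutoff_ge eta Heta x).
  enough (- (M * rB) <= Dprim eta) by (pose proof (Dprim_incr eta (cutoff eta x) Heta H); lra).
  destruct (Req_dec eta rB) as [->|Hne]; [rewrite Dprim_rB; pose proof damping_bound_ge0; nra|].
  destruct (mean_value Dprim delta eta rB) as [c [Hc E]]; [lra | intros; apply is_derive_Dprim; lra |].
  rewrite Dprim_rB in E. pose proof (delta_le c ltac:(lra)). pose proof (delta_ge0 c ltac:(lra)). nra.
Qed.

Lemma Dcut_lipschitz x y : Rabs (Dcut x - Dcut y) <= M * Rabs (x - y).
Proof.
  apply (lipschitz_of_derive_bound_R Dcut Dcut'); [apply is_derive_Dcut|].
  intros s. pose proof (Dcut'_range s). rewrite Rabs_right; lra.
Qed.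

Lemma Gcut_lipschitz x y : Rabs (Gcut x - Gcut y) <= 2 / eta ^ 3 * Rabs (x - y).
Proof.
  apply (lipschitz_of_derive_bound_R Gcut Gcut'); [apply is_derive_Gcut|].
  intros s. pose proof (Gcut'_range s). rewrite Rabs_right; lra.
Qed.

Lemma Dcut'_continuous x : continuous Dcut' x.
Proof.
  apply (continuous_mult (fun x => delta (cutoff eta x)) (ramp eta)); [|apply ramp_continuous; auto].
  apply (continuous_comp (cutoff eta) delta); [apply cutoff_continuous; auto|].
  apply delta_continuous. pose proof (cutoff_ge eta Heta x); lra.
Qed.

Lemma Gcut'_continuous x : continuous Gcut' x.
Proof.
  pose proof (cutoff_ge eta Heta x).
  apply (continuous_mult (fun x => 2 * ramp eta x) (fun x => / cutoff eta x ^ 3)).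
  - apply (continuous_mult (fun _ => 2) (ramp eta)); [apply continuous_const | apply ramp_continuous; auto].
  - apply (continuous_comp (cutoff eta) (fun y => / y ^ 3)); [apply cutoff_continuous; auto|].
    eapply is_derive_continuous. auto_derive; [|reflexivity].
    intro Z. assert (0 < cutoff eta x * cutoff eta x) by nra. nra.
Qed.

Lemma Dcut'_lipschitz_on R0 :
  exists K, 0 <= K /\ forall x y, Rabs x <= R0 -> Rabs y <= R0 ->
    Rabs (Dcut' x - Dcut' y) <= K * Rabs (x - y).
Proof.
  destruct (delta_lipschitz_on eta (Rmax R0 (2 * eta)) Heta) as [Kd [HKd Hl]];
    [eapply Rle_trans; [|apply Rmax_r]; lra|].
  pose proof damping_bound_ge0.
  exists (Kd + M / eta). split; [assert (0 <= M / eta) by (apply Rdiv_le_0_compat; lra); lra|].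
  intros x y Hx Hy. unfold Dcut'.
  pose proof (cutoff_bound eta Heta x R0 Hx). pose proof (cutoff_bound eta Heta y R0 Hy).
  replace (delta (cutoff eta x) * ramp eta x - delta (cutoff eta y) * ramp eta y) with
    ((delta (cutoff eta x) - delta (cutoff eta y)) * ramp eta x
     + delta (cutoff eta y) * (ramp eta x - ramp eta y)) by ring.
  eapply Rle_trans; [apply Rabs_triang|]. rewrite !Rabs_mult.
  pose proof (Hl _ _ H0 H1). pose proof (cutoff_lipschitz eta Heta x y).
  pose proof (ramp_lipschitz eta Heta x y).
  pose proof (ramp_range eta x). rewrite (Rabs_right (ramp eta x)) by lra.
  pose proof (delta_ge0 (cutoff eta y) ltac:(lra)). pose proof (delta_le (cutoff eta y) ltac:(lra)).
  rewrite (Rabs_right (delta (cutoff eta y))) by lra.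
  pose proof (Rabs_pos (delta (cutoff eta x) - delta (cutoff eta y))).
  pose proof (Rabs_pos (ramp eta x - ramp eta y)). pose proof (Rabs_pos (x - y)).
  assert (Rabs (delta (cutoff eta x) - delta (cutoff eta y)) * ramp eta x <= Kd * Rabs (x - y)) by nra.
  assert (delta (cutoff eta y) * Rabs (ramp eta x - ramp eta y) <= M / eta * Rabs (x - y)).
  { apply Rle_trans with (M * (/ eta * Rabs (x - y))); [apply Rmult_le_compat; lra|].
    unfold Rdiv. lra. }
  lra.
Qed.

Lemma Gcut'_lipschitz x y : Rabs (Gcut' x - Gcut' y) <= 8 / eta ^ 4 * Rabs (x - y).
Proof.
  unfold Gcut'. pose proof (cutoff_ge eta Heta x). pose proof (cutoff_ge eta Heta y).
  replace (2 * ramp eta x / cutoff eta x ^ 3 - 2 * ramp eta y / cutoff eta y ^ 3) with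
    (2 * ((ramp eta x - ramp eta y) * / cutoff eta x ^ 3
          + ramp eta y * (/ cutoff eta x ^ 3 - / cutoff eta y ^ 3)))
    by (field; split; intro Z; nra).
  rewrite Rabs_mult, (Rabs_right 2) by lra.
  pose proof (Rabs_triang ((ramp eta x - ramp eta y) * / cutoff eta x ^ 3)
                          (ramp eta y * (/ cutoff eta x ^ 3 - / cutoff eta y ^ 3))) as Htri.
  rewrite !Rabs_mult in Htri.
  pose proof (ramp_lipschitz eta Heta x y). pose proof (ramp_range eta y).
  pose proof (inv_cube_lipschitz eta _ _ Heta H H0). pose proof (cutoff_lipschitz eta Heta x y).
  assert (0 < eta ^ 3) by (apply pow_lt; lra).
  assert (eta ^ 3 <= cutoff eta x ^ 3) by (apply pow_incr; lra).
  assert (Hi : Rabs (/ cutoff eta x ^ 3) <= / eta ^ 3)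
    by (rewrite Rabs_right; [apply Rinv_le_contravar | left; apply Rinv_0_lt_compat]; lra).
  rewrite (Rabs_right (ramp eta y)) in Htri by lra.
  pose proof (Rabs_pos (ramp eta x - ramp eta y)).
  pose proof (Rabs_pos (/ cutoff eta x ^ 3 - / cutoff eta y ^ 3)).
  pose proof (Rabs_pos (x - y)). pose proof (Rabs_pos (/ cutoff eta x ^ 3)).
  assert (A1 : Rabs (ramp eta x - ramp eta y) * Rabs (/ cutoff eta x ^ 3) <= / eta * Rabs (x - y) * / eta ^ 3)
    by (apply Rmult_le_compat; lra).
  assert (A2 : ramp eta y * Rabs (/ cutoff eta x ^ 3 - / cutoff eta y ^ 3) <= 3 / eta ^ 4 * Rabs (x - y)).
  { apply Rle_trans with (1 * (3 / eta ^ 4 * Rabs (cutoff eta x - cutoff eta y))); [apply Rmult_le_compat; lra|].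
    assert (0 <= 3 / eta ^ 4) by (apply Rdiv_le_0_compat; [lra | apply pow_lt; lra]). nra. }
  replace (/ eta * Rabs (x - y) * / eta ^ 3) with (1 / eta ^ 4 * Rabs (x - y)) in A1 by (field; lra).
  replace (8 / eta ^ 4 * Rabs (x - y)) with (2 * (1 / eta ^ 4 * Rabs (x - y) + 3 / eta ^ 4 * Rabs (x - y)))
    by (field; lra).
  lra.
Qed.

Definition flow_u v := picard_u (fun _ u w => w + Dcut u) (fun _ u _ => Gcut u) rB (- v).
Definition flow_w v := picard_w (fun _ u w => w + Dcut u) (fun _ u _ => Gcut u) rB (- v).

Definition truncated_solution (u w : R -> R) S := forall s, 0 <= s <= S ->
  is_derive u s (w s + Dcut (u s)) /\ is_derive w s (Gcut (u s)).

Definition growth_rate := 1 + 2 * M + 2 / eta ^ 3.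

Lemma eta_inv_cube_pos : 0 < 2 / eta ^ 3.
Proof. apply Rdiv_lt_0_compat; [lra | apply pow_lt; lra]. Qed.

Lemma growth_rate_ge0 : 0 <= growth_rate.
Proof. unfold growth_rate. pose proof damping_bound_ge0. pose proof eta_inv_cube_pos. lra. Qed.

Lemma flow_solution v :
  (forall t, is_derive (flow_u v) t (flow_w v t + Dcut (flow_u v t))) /\
  (forall t, is_derive (flow_w v) t (Gcut (flow_u v t))) /\
  flow_u v 0 = rB /\ flow_w v 0 = - v.
Proof.
  pose proof damping_bound_ge0. pose proof eta_inv_cube_pos.
  unfold flow_u, flow_w.
  apply (picard_solution (fun _ u w => w + Dcut u) (fun _ u _ => Gcut u) rB (- v)) with (L := 1 + M + 2 / eta ^ 3) (B := Rabs (- v + Dcut rB) + Rabs (Gcut rB)).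
  - intros u w Hu Hw t. split.
    + apply (continuous_plus w (fun s => Dcut (u s))); auto.
      apply (continuous_comp u Dcut); auto. eapply is_derive_continuous, is_derive_Dcut.
    + apply (continuous_comp u Gcut); auto. eapply is_derive_continuous, is_derive_Gcut.
  - lra.
  - pose proof (Rabs_pos (- v + Dcut rB)). pose proof (Rabs_pos (Gcut rB)). lra.
  - intros t u w u' w'.
    pose proof (Dcut_lipschitz u u'). pose proof (Gcut_lipschitz u u').
    replace (w + Dcut u - (w' + Dcut u')) with ((w - w') + (Dcut u - Dcut u')) by ring.
    pose proof (Rabs_triang (w - w') (Dcut u - Dcut u')).
    pose proof (Rabs_pos (u - u')). pose proof (Rabs_pos (w - w')). nra.
  - intros t. lra.
Qed.

Lemma flow_truncated_solution v S : truncated_solution (flow_u v) (flow_w v) S.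
Proof. intros s _. destruct (flow_solution v) as [A [B _]]. auto. Qed.

Lemma flow_continuous v t : continuous (flow_u v) t.
Proof. exact (is_derive_continuous _ _ _ (proj1 (flow_solution v) t)). Qed.

Lemma truncated_solution_gronwall u1 w1 u2 w2 S :
  truncated_solution u1 w1 S -> truncated_solution u2 w2 S -> forall s, 0 <= s <= S ->
  (u1 s - u2 s) ^ 2 + (w1 s - w2 s) ^ 2 <= ((u1 0 - u2 0) ^ 2 + (w1 0 - w2 0) ^ 2) * exp (growth_rate * s).
Proof.
  intros H1 H2 s Hs. pose proof damping_bound_ge0. pose proof eta_inv_cube_pos.
  eapply Rle_trans; [apply (gronwall (fun s => (u1 s - u2 s) ^ 2 + (w1 s - w2 s) ^ 2)
    (fun s => 2 * (u1 s - u2 s) * ((w1 s - w2 s) + (Dcut (u1 s) - Dcut (u2 s)))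
            + 2 * (w1 s - w2 s) * (Gcut (u1 s) - Gcut (u2 s))) growth_rate 0 S) | right; ring];
    auto; [apply growth_rate_ge0 | lra | |].
  - intros x Hx. destruct (H1 x Hx) as [A1 B1]. destruct (H2 x Hx) as [A2 B2].
    eapply is_derive_val; [| apply is_derive_Rplus; apply (is_derive_Rcomp (fun y => y ^ 2));
      [| apply is_derive_Rminus; [apply A1 | apply A2] | | apply is_derive_Rminus; [apply B1 | apply B2]]].
    2, 3: auto_derive; auto; reflexivity.
    simpl. ring.
  - intros x Hx. rewrite Rplus_0_r. unfold growth_rate.
    apply pair_energy_rate; auto; [lra | apply Dcut_lipschitz | apply Gcut_lipschitz].
Qed.

Lemma truncated_solution_unique u1 w1 u2 w2 S :
  truncated_solution u1 w1 S -> truncated_solution u2 w2 S -> u1 0 = u2 0 -> w1 0 = w2 0 ->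
  forall s, 0 <= s <= S -> u1 s = u2 s.
Proof.
  intros H1 H2 E1 E2 s Hs.
  pose proof (truncated_solution_gronwall u1 w1 u2 w2 S H1 H2 s Hs) as G.
  rewrite E1, E2, !Rminus_diag in G. replace ((0 ^ 2 + 0 ^ 2) * exp (growth_rate * s)) with 0 in G by ring.
  pose proof (pow2_ge_0 (u1 s - u2 s)). pose proof (pow2_ge_0 (w1 s - w2 s)).
  apply Rminus_diag_uniq, Rsqr_0_uniq. unfold Rsqr. simpl in *. lra.
Qed.

Lemma flow_velocity_lipschitz v v' s : 0 <= s ->
  Rabs (flow_u v s - flow_u v' s) <= Rabs (v - v') * exp (growth_rate * s).
Proof.
  intros Hs.
  destruct (flow_solution v) as [_ [_ [C1 D1]]]. destruct (flow_solution v') as [_ [_ [C2 D2]]].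
  pose proof (truncated_solution_gronwall _ _ _ _ s (flow_truncated_solution v s)
                (flow_truncated_solution v' s) s (conj Hs (Rle_refl s))) as G.
  rewrite C1, C2, D1, D2 in G.
  replace ((rB - rB) ^ 2 + (- v - - v') ^ 2) with ((v - v') ^ 2) in G by ring.
  set (E := exp (growth_rate * s)) in *.
  assert (HE : 1 <= E) by (unfold E; rewrite <- exp_0; apply exp_le_compat; pose proof growth_rate_ge0; nra).
  apply abs_le_of_sqr_le; [pose proof (Rabs_pos (v - v')); nra|].
  rewrite Rpow_mult_distr, pow2_abs.
  pose proof (pow2_ge_0 (flow_w v s - flow_w v' s)). pose proof (pow2_ge_0 (v - v')).
  assert ((v - v') ^ 2 * E <= (v - v') ^ 2 * E ^ 2) by (apply Rmult_le_compat_l; simpl; nra).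
  lra.
Qed.

Definition lin_u v := picard_u (fun t a b => Dcut' (flow_u v t) * a + b) (fun t a _ => Gcut' (flow_u v t) * a) 0 (-1).
Definition lin_w v := picard_w (fun t a b => Dcut' (flow_u v t) * a + b) (fun t a _ => Gcut' (flow_u v t) * a) 0 (-1).

Lemma lin_solution v :
  (forall t, is_derive (lin_u v) t (Dcut' (flow_u v t) * lin_u v t + lin_w v t)) /\
  (forall t, is_derive (lin_w v) t (Gcut' (flow_u v t) * lin_u v t)) /\
  lin_u v 0 = 0 /\ lin_w v 0 = -1.
Proof.
  pose proof damping_bound_ge0. pose proof eta_inv_cube_pos.
  assert (Hk1 : forall t, continuous (fun s => Dcut' (flow_u v s)) t)
    by (intros t; apply (continuous_comp (flow_u v) Dcut'); [apply flow_continuous | apply Dcut'_continuous]).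
  assert (Hk2 : forall t, continuous (fun s => Gcut' (flow_u v s)) t)
    by (intros t; apply (continuous_comp (flow_u v) Gcut'); [apply flow_continuous | apply Gcut'_continuous]).
  unfold lin_u, lin_w.
  apply (picard_solution (fun t a b => Dcut' (flow_u v t) * a + b) (fun t a _ => Gcut' (flow_u v t) * a) 0 (-1)) with (L := 1 + M + 2 / eta ^ 3) (B := 1); [ | lra | lra | |].
  - intros a b Ha Hb t. split.
    + apply (continuous_plus (fun s => Dcut' (flow_u v s) * a s) b); auto.
      apply (continuous_mult (fun s => Dcut' (flow_u v s)) a); auto.
    + apply (continuous_mult (fun s => Gcut' (flow_u v s)) a); auto.
  - intros t u w u' w'.
    pose proof (Dcut'_range (flow_u v t)). pose proof (Gcut'_range (flow_u v t)).
    set (k1 := Dcut' (flow_u v t)) in *. set (k2 := Gcut' (flow_u v t)) in *.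
    replace (k1 * u + w - (k1 * u' + w')) with (k1 * (u - u') + (w - w')) by ring.
    replace (k2 * u - k2 * u') with (k2 * (u - u')) by ring.
    pose proof (Rabs_triang (k1 * (u - u')) (w - w')). rewrite !Rabs_mult in *.
    rewrite (Rabs_right k1), (Rabs_right k2) in * by lra.
    pose proof (Rabs_pos (u - u')). pose proof (Rabs_pos (w - w')). nra.
  - intros t. rewrite !Rmult_0_r, Rplus_0_l, Rabs_R0, Rabs_left by lra. lra.
Qed.

Lemma lin_u_neg v S : 0 < S -> lin_u v S < 0.
Proof.
  intros HS. destruct (lin_solution v) as [A [B [C D]]].
  apply (linear_system_neg (lin_u v) (lin_w v) (fun t => Dcut' (flow_u v t)) (fun t => Gcut' (flow_u v t)));
    auto.
  - intros t. apply (continuous_comp (flow_u v) Dcut'); [apply flow_continuous | apply Dcut'_continuous].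
  - intros t. apply Gcut'_range.
Qed.

Lemma flow_local_bound v S : 0 <= S -> exists R0, forall h s, Rabs h <= 1 -> 0 <= s <= S ->
  Rabs (flow_u (v + h) s) <= R0 /\ Rabs (flow_u v s) <= R0.
Proof.
  intros HS.
  destruct (continuity_ab_maj (fun s => Rabs (flow_u v s)) 0 S HS) as [m [Hm _]].
  { intros s _. apply continuity_pt_filterlim, (continuous_Rabs_comp (flow_u v)), flow_continuous. }
  exists (Rabs (flow_u v m) + exp (growth_rate * S)).
  intros h s Hh Hs. pose proof (Hm s Hs).
  pose proof (flow_velocity_lipschitz (v + h) v s ltac:(lra)).
  replace (v + h - v) with h in * by ring.
  assert (exp (growth_rate * s) <= exp (growth_rate * S))
    by (apply exp_le_compat; pose proof growth_rate_ge0; nra).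
  pose proof (Rabs_triang_inv (flow_u (v + h) s) (flow_u v s)).
  pose proof (Rabs_pos h). pose proof (exp_pos (growth_rate * s)). split; nra.
Qed.

Lemma flow_taylor_remainders v S : 0 <= S -> exists K, 0 <= K /\ forall h s, Rabs h <= 1 -> 0 <= s <= S ->
  (Dcut (flow_u (v + h) s) - Dcut (flow_u v s) - Dcut' (flow_u v s) * (flow_u (v + h) s - flow_u v s)) ^ 2 +
  (Gcut (flow_u (v + h) s) - Gcut (flow_u v s) - Gcut' (flow_u v s) * (flow_u (v + h) s - flow_u v s)) ^ 2
    <= K * h ^ 4.
Proof.
  intros HS. pose proof growth_rate_ge0.
  set (c := exp (growth_rate * S)).
  destruct (flow_local_bound v S HS) as [R0 HR].
  destruct (Dcut'_lipschitz_on R0) as [K1 [HK1 HL1]].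
  set (K2 := 8 / eta ^ 4).
  assert (HK2 : 0 <= K2) by (apply Rdiv_le_0_compat; [lra | apply pow_lt; lra]).
  exists ((K1 ^ 2 + K2 ^ 2) * c ^ 4). split.
  { pose proof (pow_lt c 4 (exp_pos _)). pose proof (pow2_ge_0 K1). pose proof (pow2_ge_0 K2).
    apply Rmult_le_pos; lra. }
  intros h s Hh1 Hs. destruct (HR h s Hh1 Hs) as [Ra Rb].
  assert (Hq : (flow_u (v + h) s - flow_u v s) ^ 2 <= h ^ 2 * c ^ 2).
  { rewrite <- pow2_abs, <- (pow2_abs h), <- Rpow_mult_distr.
    apply pow_incr. split; [apply Rabs_pos|].
    eapply Rle_trans; [apply flow_velocity_lipschitz; lra|]. replace (v + h - v) with h by ring.
    apply Rmult_le_compat_l; [apply Rabs_pos | apply exp_le_compat; nra]. }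
  replace ((K1 ^ 2 + K2 ^ 2) * c ^ 4 * h ^ 4) with
    (K1 ^ 2 * (h ^ 2 * c ^ 2) ^ 2 + K2 ^ 2 * (h ^ 2 * c ^ 2) ^ 2) by ring.
  apply Rplus_le_compat.
  - apply taylor1_remainder_sq; auto; [intros; apply is_derive_Dcut|].
    intros s' Hs'. apply HL1; auto.
    apply Rabs_le. apply Rabs_le_between in Ra. apply Rabs_le_between in Rb.
    assert (- R0 <= Rmin (flow_u v s) (flow_u (v + h) s)) by (apply Rmin_case; lra).
    assert (Rmax (flow_u v s) (flow_u (v + h) s) <= R0) by (apply Rmax_case; lra). lra.
  - apply taylor1_remainder_sq; auto; [intros; apply is_derive_Gcut | intros; apply Gcut'_lipschitz].
Qed.

(* The error [(e1, e2)] of the first-order expansion solves the linearized system forced by the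
   Taylor remainders [R1, R2], so Gronwall bounds it by [O(h ^ 2)]. *)
Lemma flow_linearization_error v S : 0 <= S -> exists Q, 0 <= Q /\ forall h, Rabs h <= 1 ->
  (flow_u (v + h) S - flow_u v S - h * lin_u v S) ^ 2 <= Q * h ^ 4.
Proof.
  intros HS. pose proof growth_rate_ge0.
  destruct (flow_taylor_remainders v S HS) as [K [HK HR12]].
  exists (K * S * exp ((1 + growth_rate) * S)).
  split; [pose proof (exp_pos ((1 + growth_rate) * S)); apply Rmult_le_pos; [apply Rmult_le_pos|]; lra|].
  intros h Hh1.
  destruct (flow_solution v) as [A1 [B1 [C1 D1]]].
  destruct (flow_solution (v + h)) as [A2 [B2 [C2 D2]]].
  destruct (lin_solution v) as [A3 [B3 [C3 D3]]].
  set (e1 := fun s => flow_u (v + h) s - flow_u v s - h * lin_u v s).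
  set (e2 := fun s => flow_w (v + h) s - flow_w v s - h * lin_w v s).
  set (R1 := fun s => Dcut (flow_u (v + h) s) - Dcut (flow_u v s) - Dcut' (flow_u v s) * (flow_u (v + h) s - flow_u v s)).
  set (R2 := fun s => Gcut (flow_u (v + h) s) - Gcut (flow_u v s) - Gcut' (flow_u v s) * (flow_u (v + h) s - flow_u v s)).
  assert (Hfin : e1 S ^ 2 + e2 S ^ 2 <= (e1 0 ^ 2 + e2 0 ^ 2 + K * h ^ 4 * S) * exp ((1 + growth_rate) * S)).
  { apply (gronwall (fun s => e1 s ^ 2 + e2 s ^ 2)
      (fun s => 2 * e1 s * (e2 s + R1 s + Dcut' (flow_u v s) * e1 s) + 2 * e2 s * (R2 s + Gcut' (flow_u v s) * e1 s))
      (1 + growth_rate) (K * h ^ 4) S); [lra | | | | lra].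
    - apply Rmult_le_pos; [lra|]. replace 4%nat with (2 * 2)%nat by reflexivity. rewrite pow_mult. apply pow2_ge_0.
    - intros s Hs. eapply is_derive_val; [| apply is_derive_Rplus; apply (is_derive_Rcomp (fun y => y ^ 2));
        [| apply is_derive_Rminus; [apply is_derive_Rminus; [apply A2 | apply A1] | apply is_derive_scal, A3]
         | | apply is_derive_Rminus; [apply is_derive_Rminus; [apply B2 | apply B1] | apply is_derive_scal, B3]]].
      2, 3: auto_derive; auto; reflexivity.
      unfold e1, e2, R1, R2. simpl. ring.
    - intros s Hs. eapply Rle_trans; [apply (error_energy_rate _ _ _ _ _ _ M (2 / eta ^ 3));
        [apply Dcut'_range | apply Gcut'_range]|].
      pose proof (HR12 h s Hh1 Hs). unfold growth_rate, R1, R2. lra. }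
  assert (E1 : e1 0 = 0) by (unfold e1; rewrite C1, C2, C3; ring).
  assert (E2 : e2 0 = 0) by (unfold e2; rewrite D1, D2, D3; ring).
  rewrite E1, E2 in Hfin. pose proof (pow2_ge_0 (e2 S)).
  fold (e1 S). nra.
Qed.

Lemma flow_derive_velocity v S : 0 <= S -> is_derive (fun v => flow_u v S) v (lin_u v S).
Proof.
  intros HS. destruct (flow_linearization_error v S HS) as [Q [HQ Herr]].
  exact (is_derive_of_quadratic_error (fun v => flow_u v S) v (lin_u v S) Q HQ Herr).
Qed.

Lemma flow_decr_velocity w v s : w <= v -> 0 <= s -> flow_u v s <= flow_u w s.
Proof.
  intros Hwv Hs. enough (- flow_u w s <= - flow_u v s) by lra.
  apply (derive_nonneg_le (fun x => - flow_u x s) (fun x => - lin_u x s) w v); auto.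
  - intros x _. apply is_derive_Ropp, flow_derive_velocity; auto.
  - intros x _. destruct (Req_dec s 0) as [->|Hne].
    + destruct (lin_solution x) as [_ [_ [-> _]]]. lra.
    + pose proof (lin_u_neg x s ltac:(lra)). lra.
Qed.

Lemma is_derive_flow_speed v s :
  is_derive (fun s => flow_w v s + Dcut (flow_u v s)) s
    (Gcut (flow_u v s) + Dcut' (flow_u v s) * (flow_w v s + Dcut (flow_u v s))).
Proof.
  destruct (flow_solution v) as [A [B _]].
  eapply is_derive_val; [| apply is_derive_Rplus; [apply B | apply (is_derive_Rcomp Dcut (flow_u v));
                                                      [apply is_derive_Dcut | apply A]]].
  ring.
Qed.

End Truncation.

Section Horizon.

Variable T : R.
Hypothesis HT : 0 < T.

Definition above_cutoff eta v := 0 < eta /\ forall s, 0 <= s <= T -> 2 * eta < flow_u eta v s.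

Lemma above_cutoff_rB eta v : above_cutoff eta v -> 2 * eta < rB.
Proof. intros [He HP]. rewrite <- (proj1 (proj2 (proj2 (flow_solution eta He v)))). apply HP; lra. Qed.

(* Above [2 eta'] the cutoff at [eta'] is invisible, so the two truncated flows agree. *)
Lemma flow_cutoff_indep eta eta' v : above_cutoff eta v -> 0 < eta' ->
  (forall s, 0 <= s <= T -> 2 * eta' < flow_u eta v s) ->
  forall s, 0 <= s <= T -> flow_u eta' v s = flow_u eta v s.
Proof.
  intros [He HP] He' Hb.
  destruct (flow_solution eta He v) as [A1 [B1 [C1 D1]]].
  destruct (flow_solution eta' He' v) as [_ [_ [C2 D2]]].
  apply (truncated_solution_unique eta' He' _ (flow_w eta' v) _ (flow_w eta v) T);
    [apply (flow_truncated_solution eta' He') | | congruence | congruence].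
  intros s Hs. specialize (HP s Hs). specialize (Hb s Hs).
  set (x := flow_u eta v s) in *.
  rewrite (Dcut_above eta' He' x ltac:(lra)), (Gcut_above eta' He' x ltac:(lra)).
  rewrite <- (Dcut_above eta He x ltac:(lra)), <- (Gcut_above eta He x ltac:(lra)). auto.
Qed.

Lemma past_solution_truncated v r eta : 0 < eta -> past_solution delta T rB v r ->
  (forall t, - T <= t <= 0 -> 2 * eta <= r t) ->
  truncated_solution eta (fun s => r (- s)) (fun s => - Derive r (- s) - Dprim (r (- s))) T.
Proof.
  intros He [_ [_ Hr]] Hbig s Hs. assert (Hs' : - T <= - s <= 0) by lra.
  destruct (Hr _ Hs') as [Hpos [[l Hl] Hdd]].
  assert (Hl' : is_derive r (- s) (Derive r (- s))) by (apply Derive_correct; eexists; eauto).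
  specialize (Hbig _ Hs').
  rewrite (Dcut_above eta He _ Hbig), (Gcut_above eta He _ Hbig). split.
  - eapply is_derive_val; [| apply (is_derive_Rcomp r (fun t => - t)); [apply Hl' | apply is_derive_Ropp_id]].
    ring.
  - eapply is_derive_val; [| apply is_derive_Rminus;
      [apply is_derive_Ropp, (is_derive_Rcomp (Derive r) (fun t => - t)); [apply Hdd | apply is_derive_Ropp_id]
      | apply (is_derive_Rcomp Dprim (fun t => r (- t))); [apply is_derive_Dprim; auto
      | apply (is_derive_Rcomp r (fun t => - t)); [apply Hl' | apply is_derive_Ropp_id]]]].
    field. intro Z; nra.
Qed.

Lemma past_solution_above_cutoff v r : past_solution delta T rB v r ->
  exists eta, above_cutoff eta v /\ flow_u eta v T = r (- T).
Proof.
  intros Hsol. pose proof Hsol as [R0 [R1 Hr]].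
  destruct (continuity_ab_min r (- T) 0) as [xm [Hxm Hxm']]; [lra | |].
  { intros c Hc. apply continuity_pt_filterlim. destruct (Hr c Hc) as [_ [[l Hl] _]].
    exact (is_derive_continuous r c l Hl). }
  assert (Hm0 : 0 < r xm) by (apply Hr; auto).
  set (eta := r xm / 3). assert (He : 0 < eta) by (unfold eta; lra).
  assert (Heq : forall s, 0 <= s <= T -> flow_u eta v s = r (- s)).
  { destruct (flow_solution eta He v) as [_ [_ [C D]]].
    apply (truncated_solution_unique eta He _ (flow_w eta v) _ (fun s => - Derive r (- s) - Dprim (r (- s))) T).
    - apply (flow_truncated_solution eta He).
    - apply (past_solution_truncated v); auto. intros t Ht. pose proof (Hxm t Ht). unfold eta. lra.
    - rewrite C, Ropp_0. auto.
    - rewrite D, Ropp_0, R0, R1, Dprim_rB. ring. }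
  exists eta. split; [split; auto|].
  - intros s Hs. rewrite Heq by auto. pose proof (Hxm (- s) ltac:(lra)). unfold eta. lra.
  - apply Heq. lra.
Qed.

Lemma above_cutoff_past_solution eta v : above_cutoff eta v ->
  past_solution delta T rB v (fun t => flow_u eta v (- t)).
Proof.
  intros HP. pose proof (above_cutoff_rB eta v HP). destruct HP as [He HP].
  destruct (flow_solution eta He v) as [A [B [C D]]].
  set (U := flow_u eta v) in *. set (W := flow_w eta v) in *.
  assert (Hr : forall t, is_derive (fun t => U (- t)) t (- (W (- t) + Dcut eta (U (- t))))).
  { intros t. eapply is_derive_val; [| apply (is_derive_Rcomp U (fun t => - t)); [apply A | apply is_derive_Ropp_id]].
    ring. }
  assert (HD : forall t, Derive (fun t => U (- t)) t = - (W (- t) + Dcut eta (U (- t))))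
    by (intros t; apply is_derive_unique, Hr).
  split; [|split].
  - rewrite Ropp_0. auto.
  - rewrite HD, Ropp_0, C, D, Dcut_above, Dprim_rB by lra. ring.
  - intros t Ht. specialize (HP (- t) ltac:(lra)).
    split; [lra | split; [eexists; apply Hr|]].
    apply (is_derive_ext (fun t => - (W (- t) + Dcut eta (U (- t))))); [intros; symmetry; apply HD|].
    eapply is_derive_val; [| apply is_derive_Ropp, is_derive_Rplus;
      [apply (is_derive_Rcomp W (fun t => - t)); [apply B | apply is_derive_Ropp_id]
      | apply (is_derive_Rcomp (fun x => Dcut eta (U x)) (fun t => - t));
        [apply (is_derive_Rcomp (Dcut eta) U); [apply is_derive_Dcut; auto | apply A] | apply is_derive_Ropp_id]]].
    rewrite HD, Gcut_above, Dcut'_above, Dcut_above by lra. field. intro Z; nra.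
Qed.

Lemma in_I_iff_above_cutoff v : in_I delta T rB v <-> exists eta, above_cutoff eta v.
Proof.
  split.
  - intros [r Hr]. destruct (past_solution_above_cutoff v r Hr) as [eta [HP _]]. eauto.
  - intros [eta HP]. eexists. apply (above_cutoff_past_solution eta v HP).
Qed.

Lemma above_cutoff_decr eta w v : above_cutoff eta v -> w <= v -> above_cutoff eta w.
Proof.
  intros [He HP] Hwv. split; auto. intros s Hs.
  pose proof (flow_decr_velocity eta He w v s Hwv ltac:(lra)). specialize (HP s Hs). lra.
Qed.

Lemma above_cutoff_open eta v : above_cutoff eta v -> exists eps, 0 < eps /\ above_cutoff eta (v + eps).
Proof.
  intros [He HP].
  destruct (continuity_ab_min (flow_u eta v) 0 T) as [m [Hm Hm']]; [lra | |].
  { intros c _. apply continuity_pt_filterlim, flow_continuous; auto. }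
  set (mu := flow_u eta v m). assert (Hmu : 2 * eta < mu) by (apply HP; auto).
  set (c := exp (growth_rate eta * T)). assert (Hc : 0 < c) by apply exp_pos.
  set (eps := (mu - 2 * eta) / (2 * c)). assert (Heps : 0 < eps) by (apply Rdiv_lt_0_compat; lra).
  exists eps. split; auto. split; auto. intros s Hs.
  pose proof (flow_velocity_lipschitz eta He (v + eps) v s ltac:(lra)) as L.
  replace (v + eps - v) with eps in L by ring. rewrite (Rabs_right eps) in L by lra.
  assert (exp (growth_rate eta * s) <= c)
    by (apply exp_le_compat; pose proof (growth_rate_ge0 eta He); nra).
  assert (eps * exp (growth_rate eta * s) <= (mu - 2 * eta) / 2)
    by (apply Rle_trans with (eps * c); [apply Rmult_le_compat_l; lra | right; unfold eps; field; lra]).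
  apply Rabs_le_between in L. pose proof (Hm s Hs) as Hms. fold mu in Hms. lra.
Qed.

(* The speed [- r'] of the reversed flow decreases while it is negative, so a solution starting with
   [v >= 2 rB / T] would reach [0] before time [T]. *)
Lemma above_cutoff_velocity_bound eta v : above_cutoff eta v -> v < 2 * rB / T.
Proof.
  intros HP. pose proof (above_cutoff_rB eta v HP). destruct HP as [He HP].
  destruct (Rlt_dec v (2 * rB / T)) as [|Hv]; auto. exfalso.
  assert (Hv0 : 0 < v) by (assert (0 < 2 * rB / T) by (apply Rdiv_lt_0_compat; lra); lra).
  destruct (flow_solution eta He v) as [A [B [C D]]].
  set (U := flow_u eta v) in *. set (W := flow_w eta v) in *.
  set (q := fun s => W s + Dcut eta (U s)).
  assert (Hq0 : q 0 = - v) by (unfold q; rewrite C, D, Dcut_above, Dprim_rB by lra; ring).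
  assert (Hneg : forall s, 0 <= s <= T -> q s + v / 2 < 0).
  { apply continuous_induction; [lra | | rewrite Hq0; lra |].
    - intros x _. apply (continuous_plus q (fun _ => v / 2)); [|apply continuous_const].
      eapply is_derive_continuous, is_derive_flow_speed; auto.
    - intros s Hs Hbel. enough (q s <= q 0) by lra.
      enough (- q 0 <= - q s) by lra.
      apply (derive_nonneg_le (fun x => - q x)
               (fun x => - (Gcut eta (U x) + Dcut' eta (U x) * q x)) 0 s); [lra | |].
      + intros; apply is_derive_Ropp, is_derive_flow_speed; auto.
      + intros y Hy. pose proof (Hbel y ltac:(lra)). pose proof (Gcut_range eta He (U y)).
        pose proof (Dcut'_range eta He (U y)). nra. }
  assert (- U 0 - v / 2 * 0 <= - U T - v / 2 * T).
  { apply (derive_nonneg_le (fun x => - U x - v / 2 * x) (fun x => - q x - v / 2 * 1) 0 T); [lra | |].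
    - intros x _. apply is_derive_Rminus; [apply is_derive_Ropp, A | apply is_derive_scal, is_derive_Rid].
    - intros x Hx. pose proof (Hneg x ltac:(lra)). lra. }
  rewrite C in H0. pose proof (HP T ltac:(lra)). fold U in H1.
  assert (rB <= v / 2 * T).
  { apply Rnot_lt_le in Hv. apply Rmult_le_compat_r with (r := T / 2) in Hv; [|lra].
    replace (2 * rB / T * (T / 2)) with rB in Hv by (field; lra). lra. }
  lra.
Qed.

(* With [eta = rB / 4]: [w' >= - 1 / eta ^ 2] and [Dcut >= - M rB], so for [v] very negative the
   reversed flow moves away from the origin at speed at least [- v - C]. *)
Lemma above_cutoff_very_negative v : 0 <= - v - (T / (rB / 4) ^ 2 + M * rB) ->
  above_cutoff (rB / 4) v /\ rB + (- v - (T / (rB / 4) ^ 2 + M * rB)) * T <= flow_u (rB / 4) v T.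
Proof.
  intros Hc. set (eta := rB / 4) in *. assert (He : 0 < eta) by (unfold eta; lra).
  set (c := - v - (T / eta ^ 2 + M * rB)) in *.
  destruct (flow_solution eta He v) as [A [B [C D]]].
  set (U := flow_u eta v) in *. set (W := flow_w eta v) in *.
  assert (Hp2 : 0 < eta ^ 2) by (apply pow_lt; lra).
  assert (HW : forall s, 0 <= s -> - v - s / eta ^ 2 <= W s).
  { intros s Hs. enough (W 0 + 0 / eta ^ 2 <= W s + s / eta ^ 2) by (rewrite D in *; unfold Rdiv in *; lra).
    apply (derive_nonneg_le (fun x => W x + x / eta ^ 2) (fun x => Gcut eta (U x) + / eta ^ 2) 0 s); auto.
    - intros x _. apply is_derive_Rplus; [apply B|].
      apply (is_derive_ext (fun x => / eta ^ 2 * x)); [intros t; unfold Rdiv; apply Rmult_comm|].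
      apply (is_derive_val _ _ (/ eta ^ 2 * 1)); [ring | apply is_derive_scal, is_derive_Rid].
    - intros x _. pose proof (Gcut_range eta He (U x)). lra. }
  assert (HU : forall s, 0 <= s <= T -> rB + c * s <= U s).
  { intros s Hs. enough (U 0 - c * 0 <= U s - c * s) by (rewrite C in *; lra).
    apply (derive_nonneg_le (fun x => U x - c * x) (fun x => (W x + Dcut eta (U x)) - c * 1) 0 s); [lra | |].
    - intros x _. apply is_derive_Rminus; [apply A | apply is_derive_scal, is_derive_Rid].
    - intros x Hx. pose proof (HW x ltac:(lra)). pose proof (Dcut_ge eta He (U x) ltac:(unfold eta; lra)).
      assert (x / eta ^ 2 <= T / eta ^ 2)
        by (unfold Rdiv; apply Rmult_le_compat_r; [left; apply Rinv_0_lt_compat|]; lra).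
      unfold c. lra. }
  split; [split; auto|].
  - intros s Hs. pose proof (HU s Hs). assert (0 <= c * s) by (apply Rmult_le_pos; lra).
    fold U. assert (2 * eta < rB) by (unfold eta; lra). lra.
  - apply HU. lra.
Qed.

(* An interior minimum [m] of the reversed flow would be a critical point with [u'' = Gcut < 0]. *)
Lemma flow_min_endpoints eta v : 0 < eta ->
  forall s, 0 <= s <= T -> Rmin rB (flow_u eta v T) <= flow_u eta v s.
Proof.
  intros He.
  destruct (flow_solution eta He v) as [A [B [C D]]].
  set (U := flow_u eta v) in *. set (W := flow_w eta v) in *.
  set (q := fun s => W s + Dcut eta (U s)).
  destruct (continuity_ab_min U 0 T) as [m [Hm Hm']]; [lra | |].
  { intros c _. apply continuity_pt_filterlim. eapply is_derive_continuous; apply A. }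
  intros s Hs. eapply Rle_trans; [|apply Hm; auto].
  destruct (Req_dec m 0) as [->|Hm0]; [rewrite C; apply Rmin_l|].
  destruct (Req_dec m T) as [->|HmT]; [apply Rmin_r|].
  exfalso.
  assert (Hright : forall d, 0 < d -> exists y, m < y < m + d /\ 0 <= y <= T)
    by (intros d Hd; exists (m + Rmin d (T - m) / 2);
        assert (0 < Rmin d (T - m)) by (apply Rmin_case; lra);
        pose proof (Rmin_l d (T - m)); pose proof (Rmin_r d (T - m)); lra).
  destruct (Rtotal_order (q m) 0) as [Hlt|[Heq|Hgt]].
  - destruct (derive_neg_right U m (q m) (A m) Hlt) as [d [Hd0 Hy]].
    destruct (Hright d Hd0) as [y [Hy1 Hy2]].
    pose proof (Hy y Hy1). pose proof (Hm y Hy2). lra.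
  - pose proof (is_derive_flow_speed eta He v m) as Hqm.
    change (is_derive q m (Gcut eta (U m) + Dcut' eta (U m) * q m)) in Hqm.
    rewrite Heq, Rmult_0_r, Rplus_0_r in Hqm.
    pose proof (Gcut_range eta He (U m)).
    destruct (derive_neg_right q m _ Hqm ltac:(lra)) as [d [Hd0 Hy]].
    destruct (Hright d Hd0) as [y [Hy1 Hy2]].
    assert (U y < U m).
    { enough (- U m < - U y) by lra.
      apply (derive_pos_lt (fun x => - U x) (fun x => - q x) m y); [lra | |].
      - intros; apply is_derive_Ropp, A.
      - intros x Hx. pose proof (Hy x ltac:(lra)). lra. }
    pose proof (Hm y Hy2). lra.
  - destruct (derive_pos_left U m (q m) (A m) Hgt) as [d [Hd0 Hy]].
    set (y := m - Rmin d m / 2).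
    assert (0 < Rmin d m) by (apply Rmin_case; lra).
    pose proof (Rmin_l d m). pose proof (Rmin_r d m).
    pose proof (Hy y ltac:(unfold y; lra)). pose proof (Hm y ltac:(unfold y; lra)). lra.
Qed.

(* [endpoint] reads [r (- T)] off any truncation that the solution stays above; outside the set of
   admissible velocities its value [0] is irrelevant. *)
Definition endpoint v :=
  match excluded_middle_informative (exists eta, above_cutoff eta v) with
  | left H => flow_u (proj1_sig (constructive_indefinite_description _ H)) v T
  | right _ => 0
  end.

Lemma endpoint_eq eta v : above_cutoff eta v -> endpoint v = flow_u eta v T.
Proof.
  intros HP. unfold endpoint.
  destruct (excluded_middle_informative (exists eta, above_cutoff eta v)) as [H|H]; [|exfalso; eauto].
  destruct (constructive_indefinite_description _ H) as [eta' HP']. simpl.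
  pose proof HP as [_ HPs]. pose proof HP' as [_ HPs'].
  destruct (Rle_dec eta eta').
  - symmetry. apply (flow_cutoff_indep eta' eta v HP' (proj1 HP)); [|lra].
    intros s Hs. specialize (HPs' s Hs). lra.
  - apply (flow_cutoff_indep eta eta' v HP (proj1 HP')); [|lra].
    intros s Hs. specialize (HPs s Hs). lra.
Qed.

Lemma velocity_set_interval : exists beta, forall v, in_I delta T rB v <-> v < beta.
Proof.
  set (C := T / (rB / 4) ^ 2 + M * rB).
  assert (Hne : in_I delta T rB (- C))
    by (apply in_I_iff_above_cutoff; exists (rB / 4); apply above_cutoff_very_negative; unfold C; lra).
  assert (Hbd : bound (in_I delta T rB)).
  { exists (2 * rB / T). intros v Hv. apply in_I_iff_above_cutoff in Hv. destruct Hv as [eta HP].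
    left. apply (above_cutoff_velocity_bound eta v HP). }
  destruct (completeness _ Hbd (ex_intro _ _ Hne)) as [beta [Hub Hlub]].
  exists beta. intros v. split.
  - intros Hv. apply in_I_iff_above_cutoff in Hv. destruct Hv as [eta HP].
    destruct (above_cutoff_open eta v HP) as [eps [Heps HP']].
    enough (v + eps <= beta) by lra.
    apply Hub, in_I_iff_above_cutoff. eauto.
  - intros Hv. destruct (classic (exists w, in_I delta T rB w /\ v <= w)) as [[w [Hw Hvw]]|Hno].
    + apply in_I_iff_above_cutoff in Hw. destruct Hw as [eta HP].
      apply in_I_iff_above_cutoff. exists eta. apply (above_cutoff_decr eta v w HP Hvw).
    + exfalso. enough (beta <= v) by lra. apply Hlub. intros w Hw.
      destruct (Rle_dec w v); auto. exfalso. apply Hno. exists w. split; auto. lra.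
Qed.

Lemma endpoint_value v r : past_solution delta T rB v r -> endpoint v = r (- T).
Proof.
  intros Hr. destruct (past_solution_above_cutoff v r Hr) as [eta [HP HE]].
  rewrite (endpoint_eq eta v HP). auto.
Qed.

Lemma endpoint_lim_minfty : is_lim endpoint m_infty p_infty.
Proof.
  set (C := T / (rB / 4) ^ 2 + M * rB).
  apply is_lim_spec. intros A. simpl.
  exists (- (C + Rabs A / T)). intros v Hv.
  assert (HA : Rabs A / T * T = Rabs A) by (field; lra).
  assert (0 <= Rabs A / T) by (apply Rdiv_le_0_compat; [apply Rabs_pos | lra]).
  destruct (above_cutoff_very_negative v) as [HP Hlow]; [unfold C in *; lra|].
  rewrite (endpoint_eq _ v HP). fold C in Hlow.
  assert (Rabs A < (- v - C) * T) by (rewrite <- HA; apply Rmult_lt_compat_r; lra).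
  pose proof (Rle_abs A). lra.
Qed.

Lemma flow_above_of_endpoints eta eta0 v : above_cutoff eta v -> 0 < eta0 ->
  3 * eta0 <= Rmin rB (flow_u eta v T) -> forall s, 0 <= s <= T -> 3 * eta0 <= flow_u eta0 v s.
Proof.
  intros HP He0 Hend.
  assert (Hmin : forall s, 0 <= s <= T -> 3 * eta0 <= flow_u eta v s)
    by (intros s Hs; pose proof (flow_min_endpoints eta v (proj1 HP) s Hs); lra).
  intros s Hs. rewrite (flow_cutoff_indep eta eta0 v HP He0); auto.
  intros s' Hs'. pose proof (Hmin s' Hs'). lra.
Qed.

Section Velocities.

Variable beta : R.
Hypothesis Hbeta : forall v, in_I delta T rB v <-> v < beta.

Lemma above_cutoff_lt_beta v : v < beta -> exists eta, above_cutoff eta v.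
Proof. intros Hv. apply in_I_iff_above_cutoff, Hbeta. auto. Qed.

Lemma endpoint_pos v : v < beta -> 0 < endpoint v.
Proof.
  intros Hv. destruct (above_cutoff_lt_beta v Hv) as [eta HP].
  rewrite (endpoint_eq eta v HP). destruct HP as [He HPs]. specialize (HPs T ltac:(lra)). lra.
Qed.

Lemma endpoint_decr v w : v <= w -> w < beta -> endpoint w <= endpoint v.
Proof.
  intros Hvw Hw. destruct (above_cutoff_lt_beta w Hw) as [eta HP].
  pose proof (above_cutoff_decr eta v w HP Hvw) as HPv.
  rewrite (endpoint_eq eta v HPv), (endpoint_eq eta w HP).
  apply (flow_decr_velocity eta (proj1 HP)); lra.
Qed.

Lemma endpoint_derive_neg v : v < beta -> exists d, is_derive endpoint v d /\ d < 0.
Proof.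
  intros Hv. destruct (above_cutoff_lt_beta v Hv) as [eta HP]. pose proof (proj1 HP) as He.
  destruct (above_cutoff_open eta v HP) as [eps [Heps HP']].
  exists (lin_u eta v T). split; [|apply lin_u_neg; auto].
  apply (is_derive_ext_loc (fun w => flow_u eta w T)); [|apply flow_derive_velocity; auto; lra].
  exists (mkposreal eps Heps). intros w Hw.
  unfold ball in Hw; simpl in Hw; unfold AbsRing_ball, abs, minus, plus, opp in Hw; simpl in Hw.
  apply Rabs_def2 in Hw.
  symmetry. apply endpoint_eq, (above_cutoff_decr eta w (v + eps) HP'). lra.
Qed.

(* If the endpoints stayed above [eps], the solutions for [v < beta] would all stay above [3 eta0],
   and by Lipschitz dependence on [v] so would the one for [v = beta], putting [beta] in the set. *)
Lemma endpoint_small eps : 0 < eps -> exists v, v < beta /\ endpoint v < eps.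
Proof.
  intros Heps. apply NNPP. intros Hno.
  assert (Hall : forall v, v < beta -> eps <= endpoint v)
    by (intros v Hv; apply Rnot_lt_le; intros Hlt; apply Hno; eauto).
  set (eta0 := Rmin rB eps / 3).
  assert (He0 : 0 < eta0) by (unfold eta0; assert (0 < Rmin rB eps) by (apply Rmin_case; lra); lra).
  assert (H3 : forall v s, v < beta -> 0 <= s <= T -> 3 * eta0 <= flow_u eta0 v s).
  { intros v s Hv Hs. destruct (above_cutoff_lt_beta v Hv) as [eta HP].
    apply (flow_above_of_endpoints eta); auto.
    rewrite <- (endpoint_eq eta v HP). unfold eta0. replace (3 * (Rmin rB eps / 3)) with (Rmin rB eps) by field.
    apply Rmin_glb; [apply Rmin_l | eapply Rle_trans; [apply Rmin_r | apply Hall; auto]]. }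
  set (c := exp (growth_rate eta0 * T)). assert (Hc : 0 < c) by apply exp_pos.
  set (d := eta0 / (2 * c)). assert (Hd : 0 < d) by (apply Rdiv_lt_0_compat; lra).
  assert (Hbeta_in : above_cutoff eta0 beta).
  { split; auto. intros s Hs. pose proof (H3 (beta - d) s ltac:(lra) Hs).
    pose proof (flow_velocity_lipschitz eta0 He0 beta (beta - d) s ltac:(lra)) as L.
    replace (beta - (beta - d)) with d in L by ring. rewrite (Rabs_right d) in L by lra.
    assert (exp (growth_rate eta0 * s) <= c)
      by (apply exp_le_compat; pose proof (growth_rate_ge0 eta0 He0); nra).
    assert (d * exp (growth_rate eta0 * s) <= eta0 / 2)
      by (apply Rle_trans with (d * c); [apply Rmult_le_compat_l; lra | right; unfold d; field; lra]).
    apply Rabs_le_between in L. lra. }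
  assert (in_I delta T rB beta) by (apply in_I_iff_above_cutoff; eauto).
  apply Hbeta in H. lra.
Qed.

Lemma endpoint_lim_beta : filterlim endpoint (at_left beta) (Rbar_locally (Finite 0)).
Proof.
  change (filterlim endpoint (at_left beta) (locally 0)).
  apply filterlim_locally. intros eps.
  destruct (endpoint_small eps (cond_pos eps)) as [v0 [Hv0 HRv0]].
  exists (mkposreal (beta - v0) ltac:(lra)). intros x Hx Hxb.
  unfold ball in Hx |- *; simpl in Hx |- *; unfold AbsRing_ball, abs, minus, plus, opp in Hx |- *; simpl in Hx |- *.
  apply Rabs_def2 in Hx.
  pose proof (endpoint_pos x Hxb). pose proof (endpoint_decr v0 x ltac:(lra) Hxb).
  rewrite Ropp_0, Rplus_0_r, Rabs_right by lra. lra.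
Qed.

End Velocities.

End Horizon.
End Damping.

Theorem lemma3p2 (delta : R -> R) (T rB : R)
  (Hdelta : admissible_delta delta) (HT : 0 < T) (HrB : 0 < rB) :
  exists beta : R,
    (forall v, in_I delta T rB v <-> v < beta) /\
    exists RR : R -> R,
      (forall v r, v < beta -> past_solution delta T rB v r -> RR v = r (- T)) /\
      (forall v, v < beta -> exists d, is_derive RR v d /\ d < 0) /\
      is_lim RR m_infty p_infty /\
      filterlim RR (at_left beta) (Rbar_locally (Finite 0)).
Proof.
  destruct Hdelta as [Hpos [[M Hbound] [Hder HC1]]].
  destruct (velocity_set_interval delta M rB Hpos Hbound Hder HC1 HrB T HT) as [beta Hbeta].
  exists beta. split; [exact Hbeta|].
  exists (endpoint delta rB T).
  split; [|split; [|split]].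
  - intros v r _ Hr. eapply endpoint_value; eauto.
  - intros v Hv. eapply endpoint_derive_neg; eauto.
  - eapply endpoint_lim_minfty; eauto.
  - eapply endpoint_lim_beta; eauto.
Qed.
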